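(* Let $\omega>0$, $v(x)=\omega^2x^2/2$ on $\mathbb{Z}$, $\gamma\in(-\infty,-1)$, and $H_N=\frac{N^2}{2}\Delta+N^{-2\gamma}v$ on $\ell^2(\mathbb{Z})$. Then $$\lim_{N\to\infty}\frac{E_0(H_N)}{N^{2|\gamma|}}=0,\qquad \lim_{N\to\infty}\frac{E_{2n}(H_N)}{N^{2|\gamma|}}=\lim_{N\to\infty}\frac{E_{2n-1}(H_N)}{N^{2|\gamma|}}=\frac{\omega^2n^2}{2}\quad(n\ge1).$$
   Context: $(\Delta f)(x)=2f(x)-f(x+1)-f(x-1)$; $v$ acts by multiplication. $E_n(H_N)$ is the $n$-th eigenvalue of $H_N$ counted with multiplicity, $n=0,1,2,\dots$. *)

From Stdlib Require Import Reals ZArith.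
From Coquelicot Require Import Coquelicot.
Open Scope R_scope.

(* square-summable functions on Z : sum over x >= 0 and x < 0 *)
Definition l2Z (f : Z -> R) : Prop :=
  ex_series (fun k : nat => (f (Z.of_nat k))^2 + (f (- Z.of_nat k - 1)%Z)^2).

Definition Lap (f : Z -> R) (x : Z) : R :=
  2 * f x - f (x + 1)%Z - f (x - 1)%Z.

Definition vpot (om : R) (x : Z) : R := om^2 * (IZR x)^2 / 2.

Definition HN (om gam : R) (N : nat) (f : Z -> R) (x : Z) : R :=
  (INR N)^2 / 2 * Lap f x + Rpower (INR N) (-2 * gam) * vpot om x * f x.

Definition is_eigvec (om gam : R) (N : nat) (mu : R) (f : Z -> R) : Prop :=
  l2Z f /\ (exists x, f x <> 0) /\ forall x, HN om gam N f x = mu * f x.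

Definition lin_indep (m : nat) (F : nat -> Z -> R) : Prop :=
  forall c : nat -> R,
    (forall x, sum_f_R0 (fun i => c i * F i x) m = 0) -> forall i, (i <= m)%nat -> c i = 0.

(* E_n(H_N): n-th eigenvalue counted with multiplicity (n = 0,1,2,...):
   the least λ such that there are n+1 linearly independent eigenvectors
   with eigenvalues ≤ λ. *)
Definition Eig (om gam : R) (N n : nat) : R :=
  real (Glb_Rbar (fun lam => exists (F : nat -> Z -> R) (mu : nat -> R),
     lin_indep n F /\
     forall i, (i <= n)%nat -> is_eigvec om gam N (mu i) (F i) /\ mu i <= lam)).

From Stdlib Require Import Reals ZArith List Lia Lra Classical ClassicalEpsilon.
From Coquelicot Require Import Coquelicot.
Open Scope R_scope.

(* Write [H_N = s (eps Δ + v)] with [s = N^(-2γ)] and [eps = N^(2 + 2γ) / 2 -> 0]; the rescaled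
   eigenvalues are those of [eps Δ + v], whose levels [v(j) = v(-j)] must be shown to split into
   [2n + 1] eigenvalues up to level [n].
   Upper bound: for each [j] and parity [σ = ±1] a contraction argument for the pair (eigenvalue,
   correction [h]) yields an eigenvector [e_j + σ e_(-j) + h] with [h = O(eps)], decaying like
   [2^(-|x|)], and eigenvalue [v(j) + O(eps)]; these are nearly dual to the probes
   [f ↦ (f(j) + σ f(-j)) / 2], hence independent.
   Lower bound: at a maximum of [|f|] an eigenvector satisfies [|v(x) - λ + 2 eps| <= 2 eps], so
   [λ] lies just above some [v(j)]; uniqueness of the fixed point then puts [f] in the span of the
   two constructed eigenvectors at level [j].  Eigenvectors below [v(n)] therefore span at most
   [2n - 1] dimensions. *)

Lemma geom_eventually_lt (q C eps : R) :
  0 <= q < 1 -> 0 < eps -> exists N, C * q ^ N < eps.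
Proof.
  intros Hq He.
  assert (HC : 0 < Rabs C + 1) by (pose proof (Rabs_pos C); lra).
  destruct (pow_lt_1_zero q ltac:(rewrite Rabs_pos_eq; lra) (eps / (Rabs C + 1)))
    as [N HN]; [apply Rdiv_lt_0_compat; lra|].
  exists N. specialize (HN N (Nat.le_refl _)).
  assert (Hp : 0 <= q ^ N) by (apply pow_le; lra).
  rewrite Rabs_pos_eq in HN by exact Hp.
  apply (Rmult_lt_compat_l (Rabs C + 1)) in HN; [|lra].
  replace ((Rabs C + 1) * (eps / (Rabs C + 1))) with eps in HN by (field; lra).
  assert (C * q ^ N <= Rabs C * q ^ N) by (apply Rmult_le_compat_r; [lra|apply Rle_abs]).
  nra.
Qed.

Lemma le_of_forall_le_geom (x y C q : R) :
  0 <= q < 1 -> (forall k, x <= y + C * q ^ k) -> x <= y.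
Proof.
  intros Hq H. destruct (Rle_dec x y) as [|Hn]; [assumption|].
  destruct (geom_eventually_lt q C (x - y) Hq) as [N HN]; [lra|].
  specialize (H N). lra.
Qed.

Lemma eq0_of_forall_abs_le_geom (d C q : R) :
  0 <= q < 1 -> (forall k, Rabs d <= C * q ^ k) -> d = 0.
Proof.
  intros Hq H.
  assert (Hd : Rabs d <= 0).
  { apply (le_of_forall_le_geom _ _ C q Hq). intros k. specialize (H k). lra. }
  destruct (Req_dec d 0) as [|Hnz]; [assumption|].
  pose proof (Rabs_pos_lt d Hnz). lra.
Qed.

Section GeometricIncrements.
Variables (u : nat -> R) (a q : R).
Hypotheses (Ha : 0 <= a) (Hq : 0 <= q <= / 2)
  (Hinc : forall k, Rabs (u (S k) - u k) <= a * q ^ k).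

Lemma geom_increments_tail m n : (m <= n)%nat -> Rabs (u n - u m) <= 2 * a * q ^ m.
Proof.
  assert (Hsum : forall p, Rabs (u (p + m)%nat - u m) <= 2 * a * (q ^ m - q ^ (p + m))).
  { induction p as [|p IH].
    - simpl. unfold Rminus. rewrite !Rplus_opp_r, Rabs_R0. lra.
    - replace (u (S p + m)%nat - u m)
        with ((u (S (p + m)) - u (p + m)%nat) + (u (p + m)%nat - u m)) by (simpl; ring).
      eapply Rle_trans; [apply Rabs_triang|].
      specialize (Hinc (p + m)%nat).
      assert (Hp : 0 <= q ^ (p + m)) by (apply pow_le; lra).
      change (q ^ (S p + m)) with (q * q ^ (p + m)).
      (* one step of size [a q^k] is at most twice the drop [q^k - q^(k+1)] since [q <= 1/2] *)
      assert (a * q ^ (p + m) <= 2 * a * (q ^ (p + m) - q * q ^ (p + m))).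
      { replace (2 * a * (q ^ (p + m) - q * q ^ (p + m)))
          with (a * q ^ (p + m) * (2 * (1 - q))) by ring.
        rewrite <- (Rmult_1_r (a * q ^ (p + m))) at 1.
        apply Rmult_le_compat_l; [apply Rmult_le_pos|]; lra. }
      lra. }
  intros Hmn. replace n with ((n - m) + m)%nat by lia.
  eapply Rle_trans; [apply Hsum|].
  assert (0 <= q ^ (n - m + m)) by (apply pow_le; lra).
  nra.
Qed.

Lemma geom_increments_lim_bound k : Rabs (u k - real (Lim_seq u)) <= 2 * a * q ^ k.
Proof.
  assert (Hex : ex_finite_lim_seq u).
  { apply ex_lim_seq_cauchy_corr. intros eps.
    destruct (geom_eventually_lt q (4 * a) eps ltac:(lra) (cond_pos eps)) as [N HN].
    exists N. intros n m Hn Hm.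
    pose proof (geom_increments_tail N n Hn). pose proof (geom_increments_tail N m Hm).
    replace (u n - u m) with ((u n - u N) - (u m - u N)) by ring.
    eapply Rle_lt_trans; [apply Rabs_triang|]. rewrite Rabs_Ropp. lra. }
  destruct Hex as [l Hl]. rewrite (is_lim_seq_unique u l Hl). simpl.
  apply is_lim_seq_spec in Hl.
  destruct (Rle_dec (Rabs (u k - l)) (2 * a * q ^ k)) as [|Hn]; [assumption|].
  exfalso.
  assert (Hp : 0 < Rabs (u k - l) - 2 * a * q ^ k) by lra.
  destruct (Hl (mkposreal _ Hp)) as [N HN]. simpl in HN.
  specialize (HN (N + k)%nat ltac:(lia)).
  pose proof (geom_increments_tail k (N + k)%nat ltac:(lia)) as Ht.
  pose proof (Rabs_triang (- (u (N + k)%nat - u k)) (u (N + k)%nat - l)) as Htri.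
  rewrite Rabs_Ropp in Htri.
  replace (- (u (N + k)%nat - u k) + (u (N + k)%nat - l)) with (u k - l) in Htri by ring.
  lra.
Qed.

End GeometricIncrements.

Lemma sum_f_R0_zero (f : nat -> R) m :
  (forall i, (i <= m)%nat -> f i = 0) -> sum_f_R0 f m = 0.
Proof. intros H. rewrite (sum_eq f (fun _ => 0)) by auto. rewrite sum_cte. ring. Qed.

Lemma sum_f_R0_indicator (f : nat -> R) p m : (p <= m)%nat ->
  sum_f_R0 (fun i => if Nat.eqb i p then f i else 0) m = f p.
Proof.
  induction m as [|m IH]; intros Hp.
  - replace p with 0%nat by lia. reflexivity.
  - rewrite tech5. destruct (Nat.eq_dec p (S m)) as [->|Hne].
    + rewrite Nat.eqb_refl, sum_f_R0_zero; [ring|].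
      intros i Hi. destruct (Nat.eqb_spec i (S m)); [lia|reflexivity].
    + rewrite IH by lia. destruct (Nat.eqb_spec (S m) p); [lia|ring].
Qed.

Lemma sum_f_R0_swap (f : nat -> nat -> R) m K :
  sum_f_R0 (fun i => sum_f_R0 (fun k => f i k) K) m =
  sum_f_R0 (fun k => sum_f_R0 (fun i => f i k) m) K.
Proof.
  induction m as [|m IH]; [reflexivity|].
  rewrite tech5, IH, <- sum_plus. apply sum_eq. reflexivity.
Qed.

(* Gaussian elimination: eliminate unknown [S m] with a pivot equation [k0] and recurse. *)
Lemma homogeneous_system_nontrivial (m : nat) : forall (L : list nat) (a : nat -> nat -> R),
  (length L <= m)%nat ->
  exists c : nat -> R, (exists i, (i <= m)%nat /\ c i <> 0) /\
    forall k, In k L -> sum_f_R0 (fun i => c i * a i k) m = 0.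
Proof.
  induction m as [|m IH]; intros L a HL.
  - destruct L; [|simpl in HL; lia].
    exists (fun _ => 1). split; [exists 0%nat; split; [lia|lra]|]. intros k [].
  - destruct (classic (exists k, In k L /\ a (S m) k <> 0)) as [[k0 [Hk0 Hp]]|Hno].
    + set (p := a (S m) k0) in *.
      set (b := fun i k => a i k - a (S m) k * a i k0 / p).
      assert (HL' : (length (remove Nat.eq_dec k0 L) <= m)%nat).
      { pose proof (remove_length_lt Nat.eq_dec L k0 Hk0). lia. }
      destruct (IH _ b HL') as [c' [[i0 [Hi0 Hci0]] Hc']].
      set (T := sum_f_R0 (fun i => c' i * a i k0) m).
      exists (fun i => if Nat.eqb i (S m) then - T / p else c' i). split.
      * exists i0. split; [lia|]. destruct (Nat.eqb_spec i0 (S m)); [lia|assumption].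
      * intros k Hk. rewrite tech5, Nat.eqb_refl.
        rewrite (sum_eq _ (fun i => c' i * a i k)).
        2:{ intros i Hi. destruct (Nat.eqb_spec i (S m)); [lia|reflexivity]. }
        destruct (Nat.eq_dec k k0) as [->|Hne]; [fold T p; field; assumption|].
        pose proof (Hc' k (in_in_remove Nat.eq_dec L Hne Hk)) as Hb. unfold b in Hb.
        rewrite (sum_eq _ (fun i => c' i * a i k - (c' i * a i k0) * (a (S m) k / p))) in Hb
          by (intros; field; assumption).
        rewrite minus_sum, <- scal_sum in Hb. fold T in Hb.
        replace (- T / p * a (S m) k) with (- (T * (a (S m) k / p))) by (field; assumption).
        lra.
    + exists (fun i => if Nat.eqb i (S m) then 1 else 0). split.
      * exists (S m). rewrite Nat.eqb_refl. split; [lia|lra].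
      * intros k Hk. rewrite tech5, Nat.eqb_refl, sum_f_R0_zero.
        -- assert (Hz : a (S m) k = 0) by (apply NNPP; intro; apply Hno; eauto).
           rewrite Hz. ring.
        -- intros i Hi. destruct (Nat.eqb_spec i (S m)); [lia|ring].
Qed.

Definition vstep (om : R) : R := om ^ 2 / 2.
Definition vlev (om : R) (j : nat) : R := vpot om (Z.of_nat j).

(* [H_N = s * Aeps eps] with [s = N^(-2γ)] and [eps = N^2 / (2 s)], see [HN_scaleN]. *)
Definition Aeps (om eps : R) (f : Z -> R) (x : Z) : R := eps * Lap f x + vpot om x * f x.

Lemma vstep_pos om : 0 < om -> 0 < vstep om.
Proof. intros Hom. unfold vstep. pose proof (pow_lt om 2 Hom). lra. Qed.

Lemma vpot_opp om x : vpot om (- x) = vpot om x.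
Proof. unfold vpot. rewrite opp_IZR. field. Qed.

Lemma vpot_abs om x : vpot om (Z.abs x) = vpot om x.
Proof. destruct (Z.abs_spec x) as [[_ ->]|[_ ->]]; [reflexivity|apply vpot_opp]. Qed.

Lemma vpot_nonneg om x : 0 <= vpot om x.
Proof.
  unfold vpot. pose proof (pow2_ge_0 om). pose proof (pow2_ge_0 (IZR x)).
  apply Rmult_le_pos; [apply Rmult_le_pos|]; lra.
Qed.

Lemma vpot_sub om x y : vpot om x - vpot om y = vstep om * IZR (x * x - y * y).
Proof. unfold vpot, vstep. rewrite minus_IZR, !mult_IZR. field. Qed.

Lemma vpot_gap om j x : 0 < om -> x <> Z.of_nat j -> x <> (- Z.of_nat j)%Z ->
  vstep om <= Rabs (vpot om x - vlev om j).
Proof.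
  intros Hom H1 H2. unfold vlev. rewrite vpot_sub, Rabs_mult.
  pose proof (vstep_pos om Hom). rewrite (Rabs_pos_eq (vstep om)) by lra.
  assert (Hnz : (x * x - Z.of_nat j * Z.of_nat j <> 0)%Z).
  { intro Hz. assert (Hf : ((x - Z.of_nat j) * (x + Z.of_nat j) = 0)%Z) by lia.
    apply Z.mul_eq_0 in Hf. lia. }
  assert (1 <= Rabs (IZR (x * x - Z.of_nat j * Z.of_nat j))).
  { rewrite <- abs_IZR. apply IZR_le. lia. }
  nra.
Qed.

Lemma abs_lt_of_vpot_lt om x n : 0 < om -> vpot om x < vlev om n -> (Z.abs x < Z.of_nat n)%Z.
Proof.
  intros Hom H. unfold vlev in H. pose proof (vpot_sub om x (Z.of_nat n)) as E.
  pose proof (vstep_pos om Hom).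
  assert (Hneg : IZR (x * x - Z.of_nat n * Z.of_nat n) < 0).
  { destruct (Rlt_dec (IZR (x * x - Z.of_nat n * Z.of_nat n)) 0); [assumption|nra]. }
  apply lt_IZR in Hneg. nia.
Qed.

Lemma abs_eq_of_vpot_close om eps x j : 0 < om -> 4 * eps < vstep om ->
  Rabs (vpot om x - vlev om j) <= 4 * eps -> Z.abs x = Z.of_nat j.
Proof.
  intros Hom He H.
  destruct (Z.eq_dec x (Z.of_nat j)) as [|N1]; [lia|].
  destruct (Z.eq_dec x (- Z.of_nat j)) as [|N2]; [lia|].
  pose proof (vpot_gap om j x Hom N1 N2). lra.
Qed.

Lemma vlev_mono om j n : (j <= n)%nat -> vlev om j <= vlev om n.
Proof.
  intros H. unfold vlev, vpot. rewrite <- !INR_IZR_INZ.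
  pose proof (le_INR j n H). pose proof (pos_INR j). pose proof (pow2_ge_0 om).
  assert (INR j ^ 2 <= INR n ^ 2) by (apply pow_incr; lra).
  unfold Rdiv. apply Rmult_le_compat_r; [lra|]. apply Rmult_le_compat_l; assumption.
Qed.

(** * Perturbation of the doubly degenerate level [v(j) = v(-j)] *)

(* The unperturbed eigenvector [e_j + sg e_(-j)] of parity [sg]. *)
Definition site_vec (j : nat) (sg : R) (x : Z) : R :=
  if Z.eq_dec x (Z.of_nat j) then 1 else if Z.eq_dec x (- Z.of_nat j) then sg else 0.

Definition on_site (j : nat) (x : Z) : bool :=
  (Z.eqb x (Z.of_nat j) || Z.eqb x (- Z.of_nat j))%bool.

Lemma on_site_site j : on_site j (Z.of_nat j) = true.
Proof. unfold on_site. rewrite Z.eqb_refl. reflexivity. Qed.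

Lemma on_site_false j x : on_site j x = false -> x <> Z.of_nat j /\ x <> (- Z.of_nat j)%Z.
Proof.
  unfold on_site. intros H. apply Bool.orb_false_iff in H. destruct H as [H1 H2].
  apply Z.eqb_neq in H1. apply Z.eqb_neq in H2. auto.
Qed.

Lemma on_site_true j x : on_site j x = true -> x = Z.of_nat j \/ x = (- Z.of_nat j)%Z.
Proof.
  unfold on_site. intros H. apply Bool.orb_true_iff in H.
  destruct H as [H|H]; apply Z.eqb_eq in H; auto.
Qed.

Lemma on_site_opp j x : on_site j (- x) = on_site j x.
Proof.
  unfold on_site.
  destruct (Z.eqb_spec x (Z.of_nat j)); destruct (Z.eqb_spec x (- Z.of_nat j));
  destruct (Z.eqb_spec (- x) (Z.of_nat j)); destruct (Z.eqb_spec (- x) (- Z.of_nat j));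
  simpl; auto; lia.
Qed.

Lemma site_vec_off j sg x : on_site j x = false -> site_vec j sg x = 0.
Proof.
  intros Hx. destruct (on_site_false j x Hx). unfold site_vec.
  destruct (Z.eq_dec _ _); [lia|]. destruct (Z.eq_dec _ _); [lia|reflexivity].
Qed.

Lemma site_vec_site j sg : site_vec j sg (Z.of_nat j) = 1.
Proof. unfold site_vec. destruct (Z.eq_dec _ _); [reflexivity|lia]. Qed.

Lemma site_vec_opp j sg x : (j = 0%nat -> sg = 1) -> sg * sg = 1 ->
  site_vec j sg (- x) = sg * site_vec j sg x.
Proof.
  intros Hj Hs. unfold site_vec.
  destruct (Z.eq_dec x (Z.of_nat j)) as [E1|E1].
  - subst x. destruct (Z.eq_dec (- Z.of_nat j) (Z.of_nat j)) as [E2|E2].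
    + assert (j = 0%nat) by lia. rewrite Hj by assumption. ring.
    + destruct (Z.eq_dec (- Z.of_nat j) (- Z.of_nat j)); [ring|lia].
  - destruct (Z.eq_dec x (- Z.of_nat j)) as [E2|E2].
    + subst x. destruct (Z.eq_dec (- - Z.of_nat j) (Z.of_nat j)); [lra|lia].
    + destruct (Z.eq_dec (- x) (Z.of_nat j)); [lia|].
      destruct (Z.eq_dec (- x) (- Z.of_nat j)); [lia|ring].
Qed.

Lemma site_vec_le1 j sg y : Rabs sg = 1 -> Rabs (site_vec j sg y) <= 1.
Proof.
  intros Hs. unfold site_vec. destruct (Z.eq_dec _ _); [rewrite Rabs_R1; lra|].
  destruct (Z.eq_dec _ _); [lra|rewrite Rabs_R0; lra].
Qed.

Lemma site_vec_nz_abs j sg y : site_vec j sg y <> 0 -> Z.abs y = Z.of_nat j.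
Proof.
  unfold site_vec. destruct (Z.eq_dec _ _); [lia|]. destruct (Z.eq_dec _ _); [lia|]. lra.
Qed.

Definition wexp (x : Z) : R := / 2 ^ (Z.abs_nat x).

Lemma wexp_pos x : 0 < wexp x.
Proof. unfold wexp. apply Rinv_0_lt_compat, pow_lt. lra. Qed.

Lemma wexp_le1 x : wexp x <= 1.
Proof.
  unfold wexp. rewrite <- Rinv_1. apply Rinv_le_contravar; [lra|]. apply pow_R1_Rle. lra.
Qed.

Lemma wexp_le_twice x y : (Z.abs_nat y <= S (Z.abs_nat x))%nat -> wexp x <= 2 * wexp y.
Proof.
  intros H. unfold wexp.
  replace (/ 2 ^ Z.abs_nat x) with (2 * / 2 ^ (S (Z.abs_nat x)))
    by (simpl; field; apply pow_nonzero; lra).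
  apply Rmult_le_compat_l; [lra|].
  apply Rinv_le_contravar; [apply pow_lt; lra|]. apply Rle_pow; [lra|lia].
Qed.

Definition admissible_weight (w : Z -> R) : Prop :=
  (forall x, 0 < w x <= 1) /\ (forall x, w (x + 1)%Z <= 2 * w x /\ w (x - 1)%Z <= 2 * w x).

Lemma admissible_wexp : admissible_weight wexp.
Proof.
  split; intros x; split.
  - apply wexp_pos.
  - apply wexp_le1.
  - apply wexp_le_twice. lia.
  - apply wexp_le_twice. lia.
Qed.

Lemma admissible_one : admissible_weight (fun _ => 1).
Proof. split; intros; lra. Qed.

Definition site_dominated (j : nat) (sg B : R) (w : Z -> R) : Prop :=
  forall x, Rabs (site_vec j sg (x + 1)) + Rabs (site_vec j sg (x - 1)) <= B * w x.

Definition Bsite (j : nat) : R := 2 ^ (j + 2).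

Lemma Bsite_ge4 j : 4 <= Bsite j.
Proof. unfold Bsite. rewrite pow_add. pose proof (pow_R1_Rle 2 j ltac:(lra)). simpl. lra. Qed.

Lemma Bsite_mono j n : (j <= n)%nat -> Bsite j <= Bsite n.
Proof. intros. unfold Bsite. apply Rle_pow; [lra|lia]. Qed.

Lemma site_vec_wexp j sg x : Rabs sg = 1 -> Rabs (site_vec j sg x) <= 2 ^ j * wexp x.
Proof.
  intros Hs. destruct (Req_dec (site_vec j sg x) 0) as [E|E].
  - rewrite E, Rabs_R0. apply Rmult_le_pos; [apply pow_le; lra|left; apply wexp_pos].
  - apply site_vec_nz_abs in E. eapply Rle_trans; [apply site_vec_le1; assumption|].
    unfold wexp. replace (Z.abs_nat x) with j by lia.
    rewrite Rinv_r by (apply pow_nonzero; lra). lra.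
Qed.

Lemma site_dominated_wexp j sg : Rabs sg = 1 -> site_dominated j sg (Bsite j) wexp.
Proof.
  intros Hs x. destruct admissible_wexp as [_ Hw2]. destruct (Hw2 x) as [Hp Hm].
  pose proof (pow_le 2 j ltac:(lra)) as H2.
  pose proof (site_vec_wexp j sg (x + 1) Hs). pose proof (site_vec_wexp j sg (x - 1) Hs).
  assert (2 ^ j * wexp (x + 1) <= 2 ^ j * (2 * wexp x)) by (apply Rmult_le_compat_l; lra).
  assert (2 ^ j * wexp (x - 1) <= 2 ^ j * (2 * wexp x)) by (apply Rmult_le_compat_l; lra).
  unfold Bsite. rewrite pow_add. simpl. lra.
Qed.

Lemma site_dominated_one j sg : Rabs sg = 1 -> site_dominated j sg (Bsite j) (fun _ => 1).
Proof.
  intros Hs x. pose proof (site_vec_le1 j sg (x + 1) Hs).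
  pose proof (site_vec_le1 j sg (x - 1) Hs). pose proof (Bsite_ge4 j). lra.
Qed.

Definition nbr_sum (j : nat) (sg : R) (h : Z -> R) (x : Z) : R :=
  (site_vec j sg (x + 1) + h (x + 1)%Z) + (site_vec j sg (x - 1) + h (x - 1)%Z).

(* For [f = site_vec j sg + h] with [h = 0] on [±j], the equation [Aeps f = λ f] reads
   [λ = phi_lam h] at [j] and [h = phi_vec λ h] off [±j]. *)
Definition phi_lam (om eps : R) (j : nat) (sg : R) (h : Z -> R) : R :=
  vlev om j + eps * (2 - nbr_sum j sg h (Z.of_nat j)).

Definition phi_vec (om eps : R) (j : nat) (sg l : R) (h : Z -> R) (x : Z) : R :=
  if on_site j x then 0 else eps * (nbr_sum j sg h x / (vpot om x - l + 2 * eps)).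

Definition in_ball (om : R) (j : nat) (B : R) (w : Z -> R) (l : R) (h : Z -> R) : Prop :=
  Rabs (l - vlev om j) <= vstep om / 2 /\ forall x, Rabs (h x) <= B * w x.

Lemma Rabs_div_le a b c : 0 < c -> c <= Rabs b -> Rabs (a / b) <= Rabs a / c.
Proof.
  intros Hc Hb. assert (b <> 0) by (intro E; rewrite E, Rabs_R0 in Hb; lra).
  rewrite Rabs_div by assumption. unfold Rdiv.
  apply Rmult_le_compat_l; [apply Rabs_pos|]. apply Rinv_le_contravar; assumption.
Qed.

Lemma Rabs_quot_sub_le s1 s2 d1 d2 c : 0 < c -> c <= Rabs d1 -> c <= Rabs d2 ->
  Rabs (s1 / d1 - s2 / d2) <= Rabs (s1 - s2) / c + Rabs s2 * Rabs (d1 - d2) / c ^ 2.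
Proof.
  intros Hc H1 H2.
  assert (d1 <> 0) by (intro E; rewrite E, Rabs_R0 in H1; lra).
  assert (d2 <> 0) by (intro E; rewrite E, Rabs_R0 in H2; lra).
  replace (s1 / d1 - s2 / d2) with ((s1 - s2) / d1 + s2 * (d2 - d1) / (d1 * d2))
    by (field; split; assumption).
  eapply Rle_trans; [apply Rabs_triang|]. apply Rplus_le_compat.
  - apply Rabs_div_le; assumption.
  - rewrite (Rabs_minus_sym d1 d2), <- Rabs_mult.
    apply Rabs_div_le; [apply pow_lt; assumption|].
    rewrite Rabs_mult. simpl. rewrite Rmult_1_r.
    apply Rmult_le_compat; lra.
Qed.

Lemma denom_lower_bound om eps j l x : 0 < om -> 0 < eps -> eps <= vstep om / 8 ->
  Rabs (l - vlev om j) <= vstep om / 2 -> on_site j x = false ->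
  vstep om / 4 <= Rabs (vpot om x - l + 2 * eps).
Proof.
  intros Hom He He8 Hl Hx. destruct (on_site_false j x Hx) as [Hx1 Hx2].
  pose proof (vpot_gap om j x Hom Hx1 Hx2) as Hgap.
  pose proof (Rabs_triang_inv (vpot om x - vlev om j) (l - vlev om j - 2 * eps)) as Htri.
  replace (vpot om x - vlev om j - (l - vlev om j - 2 * eps))
    with (vpot om x - l + 2 * eps) in Htri by ring.
  pose proof (Rabs_triang (l - vlev om j) (- (2 * eps))) as Hl2.
  rewrite Rabs_Ropp, (Rabs_pos_eq (2 * eps)) in Hl2 by lra.
  replace (l - vlev om j + - (2 * eps)) with (l - vlev om j - 2 * eps) in Hl2 by ring.
  lra.
Qed.

Section PhiBounds.
Variables (om eps : R) (j : nat) (sg B : R) (w : Z -> R).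
Hypotheses (Hom : 0 < om) (He : 0 < eps) (He8 : eps <= vstep om / 8) (HB : 0 <= B)
  (Hw : admissible_weight w) (Hdom : site_dominated j sg B w).

Lemma nbr_sum_bound h x :
  (forall y, Rabs (h y) <= B * w y) -> Rabs (nbr_sum j sg h x) <= 5 * B * w x.
Proof.
  intros Hh. destruct Hw as [_ Hw2]. destruct (Hw2 x) as [Hp Hm].
  pose proof (Hdom x). pose proof (Hh (x + 1)%Z). pose proof (Hh (x - 1)%Z).
  assert (B * w (x + 1)%Z <= B * (2 * w x)) by (apply Rmult_le_compat_l; lra).
  assert (B * w (x - 1)%Z <= B * (2 * w x)) by (apply Rmult_le_compat_l; lra).
  unfold nbr_sum.
  pose proof (Rabs_triang (site_vec j sg (x + 1) + h (x + 1)%Z)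
                          (site_vec j sg (x - 1) + h (x - 1)%Z)).
  pose proof (Rabs_triang (site_vec j sg (x + 1)) (h (x + 1)%Z)).
  pose proof (Rabs_triang (site_vec j sg (x - 1)) (h (x - 1)%Z)).
  lra.
Qed.

Lemma nbr_sum_lipschitz h1 h2 a x : (forall y, Rabs (h1 y - h2 y) <= a * w y) ->
  Rabs (nbr_sum j sg h1 x - nbr_sum j sg h2 x) <= 4 * a * w x.
Proof.
  intros Hd. destruct Hw as [Hw1 Hw2]. destruct (Hw2 x) as [Hp Hm]. destruct (Hw1 x).
  assert (Ha : 0 <= a) by (pose proof (Hd x); pose proof (Rabs_pos (h1 x - h2 x)); nra).
  replace (nbr_sum j sg h1 x - nbr_sum j sg h2 x)
    with ((h1 (x + 1)%Z - h2 (x + 1)%Z) + (h1 (x - 1)%Z - h2 (x - 1)%Z))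
    by (unfold nbr_sum; ring).
  pose proof (Hd (x + 1)%Z). pose proof (Hd (x - 1)%Z).
  assert (a * w (x + 1)%Z <= a * (2 * w x)) by (apply Rmult_le_compat_l; lra).
  assert (a * w (x - 1)%Z <= a * (2 * w x)) by (apply Rmult_le_compat_l; lra).
  pose proof (Rabs_triang (h1 (x + 1)%Z - h2 (x + 1)%Z) (h1 (x - 1)%Z - h2 (x - 1)%Z)).
  lra.
Qed.

Lemma phi_lam_bound l h :
  in_ball om j B w l h -> Rabs (phi_lam om eps j sg h - vlev om j) <= eps * (2 + 5 * B).
Proof.
  intros [_ Hh]. unfold phi_lam.
  replace (vlev om j + eps * (2 - nbr_sum j sg h (Z.of_nat j)) - vlev om j)
    with (eps * (2 - nbr_sum j sg h (Z.of_nat j))) by ring.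
  rewrite Rabs_mult, (Rabs_pos_eq eps) by lra.
  apply Rmult_le_compat_l; [lra|].
  pose proof (nbr_sum_bound h (Z.of_nat j) Hh). destruct Hw as [Hw1 _].
  destruct (Hw1 (Z.of_nat j)).
  assert (Rabs (2 - nbr_sum j sg h (Z.of_nat j)) <= 2 + Rabs (nbr_sum j sg h (Z.of_nat j))).
  { unfold Rminus. eapply Rle_trans; [apply Rabs_triang|].
    rewrite Rabs_Ropp, (Rabs_pos_eq 2) by lra. lra. }
  nra.
Qed.

Lemma phi_lam_lipschitz h1 h2 a : (forall y, Rabs (h1 y - h2 y) <= a * w y) ->
  Rabs (phi_lam om eps j sg h1 - phi_lam om eps j sg h2) <= eps * (4 * a).
Proof.
  intros Hd. unfold phi_lam.
  replace (vlev om j + eps * (2 - nbr_sum j sg h1 (Z.of_nat j))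
           - (vlev om j + eps * (2 - nbr_sum j sg h2 (Z.of_nat j))))
    with (- eps * (nbr_sum j sg h1 (Z.of_nat j) - nbr_sum j sg h2 (Z.of_nat j))) by ring.
  rewrite Rabs_mult, Rabs_Ropp, (Rabs_pos_eq eps) by lra.
  apply Rmult_le_compat_l; [lra|].
  pose proof (nbr_sum_lipschitz h1 h2 a (Z.of_nat j) Hd). destruct Hw as [Hw1 _].
  destruct (Hw1 (Z.of_nat j)).
  assert (0 <= a) by (pose proof (Hd 0%Z); pose proof (Rabs_pos (h1 0%Z - h2 0%Z));
                      destruct (Hw1 0%Z); nra).
  nra.
Qed.

Lemma phi_vec_bound l h x :
  in_ball om j B w l h -> Rabs (phi_vec om eps j sg l h x) <= 20 * eps / vstep om * B * w x.
Proof.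
  intros [Hl Hh]. pose proof (vstep_pos om Hom) as Hq. destruct Hw as [Hw1 _].
  destruct (Hw1 x). unfold phi_vec. destruct (on_site j x) eqn:Ex.
  - rewrite Rabs_R0. apply Rmult_le_pos; [apply Rmult_le_pos|]; [|lra|lra].
    unfold Rdiv. apply Rmult_le_pos; [lra|left; apply Rinv_0_lt_compat; lra].
  - pose proof (denom_lower_bound om eps j l x Hom He He8 Hl Ex) as Hd.
    pose proof (nbr_sum_bound h x Hh) as Hn.
    rewrite Rabs_mult, (Rabs_pos_eq eps) by lra.
    apply Rle_trans with (eps * (5 * B * w x / (vstep om / 4))); [|right; field; lra].
    apply Rmult_le_compat_l; [lra|].
    eapply Rle_trans; [apply (Rabs_div_le _ _ (vstep om / 4)); [lra|exact Hd]|].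
    unfold Rdiv. apply Rmult_le_compat_r; [left; apply Rinv_0_lt_compat; lra|exact Hn].
Qed.

Lemma phi_vec_lipschitz l1 h1 l2 h2 a x :
  in_ball om j B w l1 h1 -> in_ball om j B w l2 h2 ->
  Rabs (l1 - l2) <= a -> (forall y, Rabs (h1 y - h2 y) <= a * w y) ->
  Rabs (phi_vec om eps j sg l1 h1 x - phi_vec om eps j sg l2 h2 x)
    <= eps * (16 / vstep om + 80 * B / vstep om ^ 2) * a * w x.
Proof.
  intros [Hl1 _] [Hl2 Hh2] Hdl Hdh. pose proof (vstep_pos om Hom) as Hq.
  assert (Ha : 0 <= a) by (pose proof (Rabs_pos (l1 - l2)); lra).
  assert (H16 : 0 < 16 / vstep om) by (apply Rdiv_lt_0_compat; lra).
  assert (H80 : 0 <= 80 * B / vstep om ^ 2)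
    by (unfold Rdiv; apply Rmult_le_pos; [lra|left; apply Rinv_0_lt_compat, pow_lt; lra]).
  destruct Hw as [Hw1 _]. destruct (Hw1 x).
  unfold phi_vec. destruct (on_site j x) eqn:Ex.
  - unfold Rminus. rewrite Rplus_opp_r, Rabs_R0.
    repeat apply Rmult_le_pos; lra.
  - set (c := vstep om / 4).
    pose proof (denom_lower_bound om eps j l1 x Hom He He8 Hl1 Ex) as Hd1.
    pose proof (denom_lower_bound om eps j l2 x Hom He He8 Hl2 Ex) as Hd2.
    rewrite <- Rmult_minus_distr_l, Rabs_mult, (Rabs_pos_eq eps) by lra.
    rewrite !Rmult_assoc. apply Rmult_le_compat_l; [lra|].
    eapply Rle_trans; [apply (Rabs_quot_sub_le _ _ _ _ c); unfold c; lra|].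
    replace (vpot om x - l1 + 2 * eps - (vpot om x - l2 + 2 * eps)) with (- (l1 - l2)) by ring.
    rewrite Rabs_Ropp.
    apply Rle_trans with (4 * a * w x / c + 5 * B * w x * a / c ^ 2);
      [|right; unfold c; field; lra].
    assert (Hc : 0 < c) by (unfold c; lra).
    apply Rplus_le_compat; unfold Rdiv;
      (apply Rmult_le_compat_r; [left; apply Rinv_0_lt_compat, pow_lt || apply Rinv_0_lt_compat; lra|]).
    + apply nbr_sum_lipschitz. exact Hdh.
    + apply Rmult_le_compat; [apply Rabs_pos|apply Rabs_pos|apply nbr_sum_bound; exact Hh2|exact Hdl].
Qed.

End PhiBounds.

(* [eps * Kcontr] bounds the Lipschitz constants of [phi_lam] ([4 eps]) and [phi_vec]. *)
Definition Kcontr (om : R) (j : nat) : R := 4 + 16 / vstep om + 80 * Bsite j / vstep om ^ 2.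

Definition eps_max (om : R) (j : nat) : R :=
  Rmin (vstep om / (4 + 10 * Bsite j)) (/ (2 * Kcontr om j)).

Lemma Kcontr_pos om j : 0 < om -> 4 <= Kcontr om j.
Proof.
  intros Hom. pose proof (vstep_pos om Hom). pose proof (Bsite_ge4 j). unfold Kcontr.
  assert (0 < 16 / vstep om) by (apply Rdiv_lt_0_compat; lra).
  assert (0 < 80 * Bsite j / vstep om ^ 2) by (apply Rdiv_lt_0_compat; [lra|apply pow_lt; lra]).
  lra.
Qed.

Lemma eps_max_pos om j : 0 < om -> 0 < eps_max om j.
Proof.
  intros Hom. pose proof (vstep_pos om Hom). pose proof (Bsite_ge4 j). pose proof (Kcontr_pos om j Hom).
  apply Rmin_pos; [apply Rdiv_lt_0_compat|apply Rinv_0_lt_compat]; lra.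
Qed.

Lemma eps_max_anti om j n : 0 < om -> (j <= n)%nat -> eps_max om n <= eps_max om j.
Proof.
  intros Hom H. pose proof (Bsite_mono j n H). pose proof (Bsite_ge4 j).
  pose proof (vstep_pos om Hom). pose proof (Kcontr_pos om j Hom).
  assert (Hq2 : 0 < / vstep om ^ 2) by (apply Rinv_0_lt_compat, pow_lt; lra).
  assert (Kcontr om j <= Kcontr om n).
  { unfold Kcontr, Rdiv. assert (80 * Bsite j * / vstep om ^ 2 <= 80 * Bsite n * / vstep om ^ 2)
      by (apply Rmult_le_compat_r; lra). lra. }
  unfold eps_max. apply Rmin_glb.
  - eapply Rle_trans; [apply Rmin_l|]. unfold Rdiv.
    apply Rmult_le_compat_l; [lra|]. apply Rinv_le_contravar; lra.
  - eapply Rle_trans; [apply Rmin_r|]. apply Rinv_le_contravar; lra.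
Qed.

Section SmallEps.
Variables (om eps : R) (j : nat).
Hypotheses (Hom : 0 < om) (He : 0 < eps) (Hd : eps <= eps_max om j).

Lemma eps_lam_radius : eps * (2 + 5 * Bsite j) <= vstep om / 2.
Proof.
  pose proof (vstep_pos om Hom). pose proof (Bsite_ge4 j).
  assert (Hle : eps <= vstep om / (4 + 10 * Bsite j)) by (eapply Rle_trans; [exact Hd|apply Rmin_l]).
  apply (Rmult_le_compat_r (4 + 10 * Bsite j)) in Hle; [|lra].
  replace (vstep om / (4 + 10 * Bsite j) * (4 + 10 * Bsite j)) with (vstep om) in Hle
    by (field; lra).
  lra.
Qed.

Lemma eps_le_vstep : eps <= vstep om / 40.
Proof. pose proof eps_lam_radius. pose proof (Bsite_ge4 j). nra. Qed.

Lemma phi_gain_le1 : 20 * eps / vstep om <= 1.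
Proof.
  pose proof eps_le_vstep. pose proof (vstep_pos om Hom).
  apply (Rmult_le_reg_r (vstep om)); [lra|]. unfold Rdiv.
  rewrite Rmult_assoc, Rinv_l by lra. lra.
Qed.

Lemma contr_le_half : 0 <= eps * Kcontr om j <= / 2.
Proof.
  pose proof (Kcontr_pos om j Hom).
  assert (Hle : eps <= / (2 * Kcontr om j)) by (eapply Rle_trans; [exact Hd|apply Rmin_r]).
  apply (Rmult_le_compat_r (Kcontr om j)) in Hle; [|lra].
  replace (/ (2 * Kcontr om j) * Kcontr om j) with (/ 2) in Hle by (field; lra).
  split; [apply Rmult_le_pos|]; lra.
Qed.

Lemma phi_maps_ball sg w l h : admissible_weight w -> site_dominated j sg (Bsite j) w ->
  in_ball om j (Bsite j) w l h ->
  in_ball om j (Bsite j) w (phi_lam om eps j sg h) (phi_vec om eps j sg l h).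
Proof.
  intros Hw Hdom HI. pose proof (Bsite_ge4 j). pose proof eps_le_vstep.
  pose proof (vstep_pos om Hom). split.
  - pose proof (phi_lam_bound om eps j sg (Bsite j) w He ltac:(lra) Hw Hdom l h HI).
    pose proof eps_lam_radius. lra.
  - intros x. destruct Hw as [Hw1 Hw2]. destruct (Hw1 x).
    eapply Rle_trans;
      [apply (phi_vec_bound om eps j sg (Bsite j) w Hom He ltac:(lra) ltac:(lra) (conj Hw1 Hw2) Hdom l h x HI)|].
    pose proof phi_gain_le1. rewrite Rmult_assoc.
    rewrite <- (Rmult_1_l (Bsite j * w x)) at 2.
    apply Rmult_le_compat_r; [apply Rmult_le_pos|]; lra.
Qed.

Lemma phi_contraction sg w l1 h1 l2 h2 a : admissible_weight w ->
  site_dominated j sg (Bsite j) w ->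
  in_ball om j (Bsite j) w l1 h1 -> in_ball om j (Bsite j) w l2 h2 ->
  Rabs (l1 - l2) <= a -> (forall x, Rabs (h1 x - h2 x) <= a * w x) ->
  Rabs (phi_lam om eps j sg h1 - phi_lam om eps j sg h2) <= eps * Kcontr om j * a /\
  forall x, Rabs (phi_vec om eps j sg l1 h1 x - phi_vec om eps j sg l2 h2 x)
              <= eps * Kcontr om j * a * w x.
Proof.
  intros Hw Hdom HI1 HI2 Hdl Hdh. pose proof (Bsite_ge4 j). pose proof eps_le_vstep.
  pose proof (vstep_pos om Hom).
  assert (Ha : 0 <= a) by (pose proof (Rabs_pos (l1 - l2)); lra).
  assert (HK : 0 < 16 / vstep om + 80 * Bsite j / vstep om ^ 2).
  { pose proof (Kcontr_pos om j Hom). unfold Kcontr in *.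
    assert (0 < 16 / vstep om) by (apply Rdiv_lt_0_compat; lra).
    assert (0 < 80 * Bsite j / vstep om ^ 2) by (apply Rdiv_lt_0_compat; [lra|apply pow_lt; lra]).
    lra. }
  split.
  - eapply Rle_trans; [apply (phi_lam_lipschitz om eps j sg w He Hw h1 h2 a Hdh)|].
    assert (0 <= eps * a * (16 / vstep om + 80 * Bsite j / vstep om ^ 2))
      by (apply Rmult_le_pos; [apply Rmult_le_pos|]; lra).
    unfold Kcontr. lra.
  - intros x. destruct Hw as [Hw1 Hw2]. destruct (Hw1 x).
    eapply Rle_trans; [apply (phi_vec_lipschitz om eps j sg (Bsite j) w Hom He ltac:(lra)
                                ltac:(lra) (conj Hw1 Hw2) Hdom l1 h1 l2 h2 a x HI1 HI2 Hdl Hdh)|].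
    apply Rmult_le_compat_r; [lra|]. apply Rmult_le_compat_r; [lra|].
    apply Rmult_le_compat_l; [lra|]. unfold Kcontr. lra.
Qed.

End SmallEps.

Lemma eq_of_geom_approx (u : nat -> R) (A B C q : R) : 0 <= q < 1 ->
  (forall k, Rabs (u k - A) <= C * q ^ k) -> (forall k, Rabs (u k - B) <= C * q ^ k) -> A = B.
Proof.
  intros Hq HA HB. apply Rminus_diag_uniq, (eq0_of_forall_abs_le_geom _ (2 * C) q Hq).
  intros k. replace (A - B) with (- (u k - A) + (u k - B)) by ring.
  eapply Rle_trans; [apply Rabs_triang|]. rewrite Rabs_Ropp.
  pose proof (HA k). pose proof (HB k). lra.
Qed.

Fixpoint picard (om eps : R) (j : nat) (sg : R) (k : nat) : R * (Z -> R) :=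
  match k with
  | O => (vlev om j, fun _ => 0)
  | S k => let p := picard om eps j sg k in
           (phi_lam om eps j sg (snd p), phi_vec om eps j sg (fst p) (snd p))
  end.

Definition lam_fix om eps j sg : R := real (Lim_seq (fun k => fst (picard om eps j sg k))).
Definition h_fix om eps j sg (x : Z) : R := real (Lim_seq (fun k => snd (picard om eps j sg k) x)).
Definition eigfun om eps j sg (x : Z) : R := site_vec j sg x + h_fix om eps j sg x.

Section FixedPoint.
Variables (om eps : R) (j : nat) (sg : R).
Hypotheses (Hom : 0 < om) (He : 0 < eps) (Hd : eps <= eps_max om j) (Hs : Rabs sg = 1).

Let a0 := vstep om + 2 * Bsite j.
Let q := eps * Kcontr om j.
Let lam k := fst (picard om eps j sg k).
Let vec k := snd (picard om eps j sg k).

Lemma a0_nonneg : 0 <= a0.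
Proof. unfold a0. pose proof (vstep_pos om Hom). pose proof (Bsite_ge4 j). lra. Qed.

Lemma contr_lt1 : 0 <= q < 1.
Proof. pose proof (contr_le_half om eps j Hom He Hd). unfold q. lra. Qed.

Lemma pow_contr_le_succ k : a0 * q ^ S k <= a0 * q ^ k.
Proof.
  pose proof contr_lt1. pose proof a0_nonneg. pose proof (pow_le q k ltac:(lra)).
  apply Rmult_le_compat_l; [lra|]. simpl. nra.
Qed.

Lemma picard_in_ball k : in_ball om j (Bsite j) wexp (lam k) (vec k).
Proof.
  induction k as [|k IH].
  - split.
    + unfold lam, Rminus. simpl. rewrite Rplus_opp_r, Rabs_R0. pose proof (vstep_pos om Hom). lra.
    + intros x. unfold vec. simpl. rewrite Rabs_R0.
      pose proof (Bsite_ge4 j). pose proof (wexp_pos x). nra.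
  - apply phi_maps_ball; auto using admissible_wexp, site_dominated_wexp.
Qed.

Lemma picard_increment k :
  Rabs (lam (S k) - lam k) <= a0 * q ^ k /\
  forall x, Rabs (vec (S k) x - vec k x) <= a0 * q ^ k * wexp x.
Proof.
  induction k as [|k [IHl IHh]].
  - destruct (picard_in_ball 1) as [L1 H1]. destruct (picard_in_ball 0) as [L0 H0].
    simpl pow. rewrite !Rmult_1_r. unfold a0. pose proof (Bsite_ge4 j). split.
    + replace (lam 1%nat - lam 0%nat) with ((lam 1%nat - vlev om j) - (lam 0%nat - vlev om j))
        by ring.
      eapply Rle_trans; [apply Rabs_triang|]. rewrite Rabs_Ropp. lra.
    + intros x. specialize (H1 x). specialize (H0 x).
      eapply Rle_trans; [apply Rabs_triang|]. rewrite Rabs_Ropp.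
      pose proof (vstep_pos om Hom). pose proof (wexp_pos x). nra.
  - destruct (phi_contraction om eps j Hom He Hd sg wexp _ _ _ _ (a0 * q ^ k)
      admissible_wexp (site_dominated_wexp j sg Hs)
      (picard_in_ball (S k)) (picard_in_ball k) IHl IHh) as [C1 C2].
    split.
    + eapply Rle_trans; [exact C1|]. right. unfold q. simpl. ring.
    + intros x. eapply Rle_trans; [apply C2|]. right. unfold q. simpl. ring.
Qed.

Lemma picard_lam_conv k : Rabs (lam k - lam_fix om eps j sg) <= 2 * a0 * q ^ k.
Proof.
  apply (geom_increments_lim_bound lam a0 q a0_nonneg); [pose proof contr_lt1;
    pose proof (contr_le_half om eps j Hom He Hd); unfold q; lra|].
  intros i. apply picard_increment.
Qed.

Lemma picard_vec_conv k x : Rabs (vec k x - h_fix om eps j sg x) <= 2 * a0 * q ^ k * wexp x.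
Proof.
  pose proof (wexp_pos x). pose proof a0_nonneg.
  replace (2 * a0 * q ^ k * wexp x) with (2 * (a0 * wexp x) * q ^ k) by ring.
  apply (geom_increments_lim_bound (fun k => vec k x) (a0 * wexp x) q);
    [nra|pose proof (contr_le_half om eps j Hom He Hd); unfold q; lra|].
  intros i. destruct (picard_increment i) as [_ H2].
  eapply Rle_trans; [apply H2|]. right; ring.
Qed.

Lemma fix_in_ball : in_ball om j (Bsite j) wexp (lam_fix om eps j sg) (h_fix om eps j sg).
Proof.
  split.
  - apply (le_of_forall_le_geom _ _ (2 * a0) q contr_lt1). intros k.
    destruct (picard_in_ball k) as [L _]. pose proof (picard_lam_conv k).
    replace (lam_fix om eps j sg - vlev om j)
      with (- (lam k - lam_fix om eps j sg) + (lam k - vlev om j)) by ring.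
    eapply Rle_trans; [apply Rabs_triang|]. rewrite Rabs_Ropp. lra.
  - intros x. apply (le_of_forall_le_geom _ _ (2 * a0 * wexp x) q contr_lt1). intros k.
    destruct (picard_in_ball k) as [_ Hh]. pose proof (picard_vec_conv k x). specialize (Hh x).
    replace (h_fix om eps j sg x) with (- (vec k x - h_fix om eps j sg x) + vec k x) by ring.
    eapply Rle_trans; [apply Rabs_triang|]. rewrite Rabs_Ropp. lra.
Qed.

Lemma picard_step_to_fix k :
  Rabs (phi_lam om eps j sg (vec k) - phi_lam om eps j sg (h_fix om eps j sg)) <= 2 * a0 * q ^ k /\
  forall x, Rabs (phi_vec om eps j sg (lam k) (vec k) x
                  - phi_vec om eps j sg (lam_fix om eps j sg) (h_fix om eps j sg) x)
            <= 2 * a0 * q ^ k * wexp x.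
Proof.
  destruct (phi_contraction om eps j Hom He Hd sg wexp _ _ _ _ (2 * a0 * q ^ k)
    admissible_wexp (site_dominated_wexp j sg Hs) (picard_in_ball k) fix_in_ball
    (picard_lam_conv k) (picard_vec_conv k)) as [S1 S2].
  fold q in S1, S2. pose proof contr_lt1. pose proof a0_nonneg. pose proof (pow_le q k ltac:(lra)).
  assert (0 <= 2 * a0 * q ^ k) by (apply Rmult_le_pos; lra).
  assert (Hle : q * (2 * a0 * q ^ k) <= 2 * a0 * q ^ k) by nra.
  split.
  - lra.
  - intros x. eapply Rle_trans; [apply S2|]. pose proof (wexp_pos x).
    apply Rmult_le_compat_r; lra.
Qed.

Lemma lam_fix_eq : lam_fix om eps j sg = phi_lam om eps j sg (h_fix om eps j sg).
Proof.
  apply (eq_of_geom_approx (fun k => lam (S k)) _ _ (2 * a0) q contr_lt1); intros k.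
  - pose proof (pow_contr_le_succ k). pose proof (picard_lam_conv (S k)). lra.
  - apply picard_step_to_fix.
Qed.

Lemma h_fix_eq x :
  h_fix om eps j sg x = phi_vec om eps j sg (lam_fix om eps j sg) (h_fix om eps j sg) x.
Proof.
  apply (eq_of_geom_approx (fun k => vec (S k) x) _ _ (2 * a0 * wexp x) q contr_lt1); intros k.
  - pose proof (pow_contr_le_succ k). pose proof (picard_vec_conv (S k) x). pose proof (wexp_pos x).
    eapply Rle_trans; [eassumption|].
    replace (2 * a0 * wexp x * q ^ k) with (2 * (a0 * q ^ k) * wexp x) by ring.
    replace (2 * a0 * q ^ S k * wexp x) with (2 * (a0 * q ^ S k) * wexp x) by ring.
    apply Rmult_le_compat_r; lra.
  - replace (2 * a0 * wexp x * q ^ k) with (2 * a0 * q ^ k * wexp x) by ring.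
    apply picard_step_to_fix.
Qed.

(* Weight [1] only asks for boundedness, which is all that is known of an arbitrary eigenvector. *)
Lemma fix_unique l h : in_ball om j (Bsite j) (fun _ => 1) l h ->
  l = phi_lam om eps j sg h -> (forall x, h x = phi_vec om eps j sg l h x) ->
  forall x, h x = h_fix om eps j sg x.
Proof.
  intros HI Hl Hh.
  assert (HI2 : in_ball om j (Bsite j) (fun _ => 1) (lam_fix om eps j sg) (h_fix om eps j sg)).
  { destruct fix_in_ball as [A B]. split; [exact A|]. intros x. specialize (B x).
    pose proof (wexp_le1 x). pose proof (Bsite_ge4 j). nra. }
  assert (Hk : forall k, Rabs (l - lam_fix om eps j sg) <= a0 * q ^ k /\
                 forall x, Rabs (h x - h_fix om eps j sg x) <= a0 * q ^ k * 1).
  { induction k as [|k [IH1 IH2]].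
    - destruct HI as [A1 B1]. destruct HI2 as [A2 B2]. simpl. rewrite !Rmult_1_r.
      unfold a0. pose proof (Bsite_ge4 j). pose proof (vstep_pos om Hom). split.
      + replace (l - lam_fix om eps j sg)
          with ((l - vlev om j) - (lam_fix om eps j sg - vlev om j)) by ring.
        eapply Rle_trans; [apply Rabs_triang|]. rewrite Rabs_Ropp. lra.
      + intros x. specialize (B1 x). specialize (B2 x).
        eapply Rle_trans; [apply Rabs_triang|]. rewrite Rabs_Ropp. lra.
    - destruct (phi_contraction om eps j Hom He Hd sg (fun _ => 1) _ _ _ _ _
        admissible_one (site_dominated_one j sg Hs) HI HI2 IH1 IH2) as [S1 S2].
      rewrite <- Hl, <- lam_fix_eq in S1. split.
      + eapply Rle_trans; [exact S1|]. right. unfold q. simpl. ring.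
      + intros x. specialize (S2 x). rewrite <- Hh, <- h_fix_eq in S2.
        eapply Rle_trans; [exact S2|]. right. unfold q. simpl. ring. }
  intros x. apply Rminus_diag_uniq, (eq0_of_forall_abs_le_geom _ a0 q contr_lt1).
  intros k. destruct (Hk k) as [_ H2]. rewrite <- (Rmult_1_r (a0 * q ^ k)). apply H2.
Qed.

End FixedPoint.

Lemma nbr_sum_opp j sg h x : (j = 0%nat -> sg = 1) -> sg * sg = 1 ->
  (forall y, h (- y)%Z = sg * h y) -> nbr_sum j sg h (- x) = sg * nbr_sum j sg h x.
Proof.
  intros Hj Hs Hh. unfold nbr_sum.
  replace (- x + 1)%Z with (- (x - 1))%Z by ring. replace (- x - 1)%Z with (- (x + 1))%Z by ring.
  rewrite !site_vec_opp, !Hh by assumption. ring.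
Qed.

Lemma phi_vec_opp om eps j sg l h x : (j = 0%nat -> sg = 1) -> sg * sg = 1 ->
  (forall y, h (- y)%Z = sg * h y) -> phi_vec om eps j sg l h (- x) = sg * phi_vec om eps j sg l h x.
Proof.
  intros Hj Hs Hh. unfold phi_vec. rewrite on_site_opp. destruct (on_site j x); [ring|].
  rewrite vpot_opp, nbr_sum_opp by assumption. unfold Rdiv. ring.
Qed.

Lemma Aeps_opp om eps sg f x :
  (forall y, f (- y)%Z = sg * f y) -> Aeps om eps f (- x) = sg * Aeps om eps f x.
Proof.
  intros Hf. unfold Aeps, Lap. rewrite vpot_opp.
  replace (- x + 1)%Z with (- (x - 1))%Z by ring. replace (- x - 1)%Z with (- (x + 1))%Z by ring.
  rewrite !Hf. ring.
Qed.

Section EigenEquation.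
Variables (om eps : R) (j : nat) (sg l : R).
Hypotheses (Hom : 0 < om) (He : 0 < eps) (He8 : eps <= vstep om / 8)
  (Hl : Rabs (l - vlev om j) <= vstep om / 2) (Hj : j = 0%nat -> sg = 1) (Hs2 : sg * sg = 1).

Lemma eig_of_fixed_point h : (forall y, h (- y)%Z = sg * h y) ->
  l = phi_lam om eps j sg h -> (forall x, h x = phi_vec om eps j sg l h x) ->
  forall x, Aeps om eps (fun y => site_vec j sg y + h y) x = l * (site_vec j sg x + h x).
Proof.
  intros Hpar Hlam Hh.
  assert (Hf : forall y, site_vec j sg (- y) + h (- y)%Z = sg * (site_vec j sg y + h y)).
  { intros y. rewrite site_vec_opp, Hpar by assumption. ring. }
  assert (Hsite : forall x, x = Z.of_nat j ->
            Aeps om eps (fun y => site_vec j sg y + h y) x = l * (site_vec j sg x + h x)).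
  { intros x ->. assert (Hj0 : h (Z.of_nat j) = 0).
    { rewrite Hh. unfold phi_vec. rewrite on_site_site. reflexivity. }
    unfold Aeps, Lap. rewrite site_vec_site, Hj0, Hlam. unfold phi_lam, nbr_sum, vlev. ring. }
  intros x. destruct (on_site j x) eqn:Ex.
  - destruct (on_site_true j x Ex) as [->| ->]; [apply Hsite; reflexivity|].
    rewrite (Aeps_opp om eps sg) by exact Hf. rewrite Hsite, Hf by reflexivity. ring.
  - pose proof (denom_lower_bound om eps j l x Hom He He8 Hl Ex) as Hden.
    pose proof (vstep_pos om Hom).
    assert (Hnz : vpot om x - l + 2 * eps <> 0) by (intro E; rewrite E, Rabs_R0 in Hden; lra).
    assert (E : (vpot om x - l + 2 * eps) * h x = eps * nbr_sum j sg h x).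
    { rewrite (Hh x) at 1. unfold phi_vec. rewrite Ex. field. exact Hnz. }
    unfold Aeps, Lap, nbr_sum in *. rewrite (site_vec_off j sg x Ex). lra.
Qed.

Lemma fixed_point_of_eig u : (forall x, Aeps om eps u x = l * u x) ->
  (forall x, u (- x)%Z = sg * u x) -> u (Z.of_nat j) = 1 ->
  let h := fun x => u x - site_vec j sg x in
  l = phi_lam om eps j sg h /\ forall x, h x = phi_vec om eps j sg l h x.
Proof.
  intros Heig Hpar Hu1 h.
  assert (Hnbr : forall x, nbr_sum j sg h x = u (x + 1)%Z + u (x - 1)%Z)
    by (intros x; unfold nbr_sum, h; ring).
  split.
  - specialize (Heig (Z.of_nat j)). unfold Aeps, Lap in Heig. rewrite Hu1 in Heig.
    unfold phi_lam, vlev. rewrite Hnbr. lra.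
  - intros x. unfold phi_vec. destruct (on_site j x) eqn:Ex.
    + unfold h. destruct (on_site_true j x Ex) as [->| ->].
      * rewrite Hu1, site_vec_site. ring.
      * rewrite Hpar, site_vec_opp, Hu1, site_vec_site by assumption. ring.
    + pose proof (denom_lower_bound om eps j l x Hom He He8 Hl Ex) as Hden.
      pose proof (vstep_pos om Hom).
      assert (Hnz : vpot om x - l + 2 * eps <> 0) by (intro E; rewrite E, Rabs_R0 in Hden; lra).
      specialize (Heig x). unfold Aeps, Lap in Heig.
      rewrite Hnbr. unfold h. rewrite (site_vec_off j sg x Ex).
      apply (Rmult_eq_reg_r (vpot om x - l + 2 * eps)); [|exact Hnz].
      field_simplify; [lra|exact Hnz].
Qed.

End EigenEquation.

Lemma wexp_opp x : wexp (- x) = wexp x.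
Proof. unfold wexp. replace (Z.abs_nat (- x)) with (Z.abs_nat x) by lia. reflexivity. Qed.

Lemma l2Z_of_wexp_bound (f : Z -> R) (C : R) : (forall x, Rabs (f x) <= C * wexp x) -> l2Z f.
Proof.
  intros Hf. unfold l2Z.
  assert (Hsq : forall x, f x ^ 2 <= C ^ 2 * wexp x ^ 2).
  { intros x. rewrite <- Rpow_mult_distr, <- pow2_abs. apply pow_incr.
    split; [apply Rabs_pos|apply Hf]. }
  assert (Hw : forall k, wexp (Z.of_nat k) = (/ 2) ^ k).
  { intros k. unfold wexp. rewrite Zabs2Nat.id, pow_inv. reflexivity. }
  assert (Hw' : forall k, wexp (- Z.of_nat k - 1) <= (/ 2) ^ k).
  { intros k. unfold wexp. replace (Z.abs_nat (- Z.of_nat k - 1)) with (S k) by lia.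
    rewrite <- pow_inv. simpl. pose proof (pow_le (/ 2) k ltac:(lra)). lra. }
  apply (@ex_series_le R_AbsRing R_CompleteNormedModule _ (fun k => (2 * C ^ 2) * (/ 4) ^ k)).
  - intros k. change (norm ?a) with (Rabs a).
    rewrite Rabs_pos_eq by (apply Rplus_le_le_0_compat; apply pow2_ge_0).
    pose proof (Hsq (Z.of_nat k)) as A. pose proof (Hsq (- Z.of_nat k - 1)%Z) as B.
    rewrite Hw in A. pose proof (Hw' k). pose proof (wexp_pos (- Z.of_nat k - 1)).
    assert (wexp (- Z.of_nat k - 1) ^ 2 <= ((/ 2) ^ k) ^ 2) by (apply pow_incr; lra).
    assert (E4 : (/ 4) ^ k = ((/ 2) ^ k) ^ 2) by (rewrite <- pow_mult, Nat.mul_comm, pow_mult;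
                                                     f_equal; field).
    pose proof (pow2_ge_0 C). rewrite E4. nra.
  - apply (@ex_series_scal_l R_AbsRing R_NormedModule (2 * C ^ 2) (fun k => (/ 4) ^ k)).
    apply ex_series_geom. rewrite Rabs_pos_eq; lra.
Qed.

Section Eigenfunction.
Variables (om eps : R) (j : nat) (sg : R).
Hypotheses (Hom : 0 < om) (He : 0 < eps) (Hd : eps <= eps_max om j) (Hs : Rabs sg = 1)
  (Hj : j = 0%nat -> sg = 1) (Hs2 : sg * sg = 1).

Lemma picard_vec_opp k x : snd (picard om eps j sg k) (- x)%Z = sg * snd (picard om eps j sg k) x.
Proof.
  revert x. induction k as [|k IH]; intros x; simpl; [ring|].
  apply phi_vec_opp; assumption.
Qed.

Lemma h_fix_opp x : h_fix om eps j sg (- x)%Z = sg * h_fix om eps j sg x.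
Proof.
  apply (eq_of_geom_approx (fun k => snd (picard om eps j sg k) (- x)%Z) _ _
           (2 * (vstep om + 2 * Bsite j) * wexp x) (eps * Kcontr om j)
           (contr_lt1 om eps j Hom He Hd)); intros k.
  - pose proof (picard_vec_conv om eps j sg Hom He Hd Hs k (- x)) as C.
    rewrite wexp_opp in C. lra.
  - rewrite picard_vec_opp.
    replace (sg * snd (picard om eps j sg k) x - sg * h_fix om eps j sg x)
      with (sg * (snd (picard om eps j sg k) x - h_fix om eps j sg x)) by ring.
    rewrite Rabs_mult, Hs, Rmult_1_l.
    pose proof (picard_vec_conv om eps j sg Hom He Hd Hs k x). lra.
Qed.

Lemma eigfun_site : eigfun om eps j sg (Z.of_nat j) = 1.
Proof.
  unfold eigfun. rewrite (h_fix_eq om eps j sg Hom He Hd Hs). unfold phi_vec.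
  rewrite on_site_site, site_vec_site. ring.
Qed.

Lemma eigfun_eig x :
  Aeps om eps (eigfun om eps j sg) x = lam_fix om eps j sg * eigfun om eps j sg x.
Proof.
  destruct (fix_in_ball om eps j sg Hom He Hd Hs) as [Hl _].
  apply (eig_of_fixed_point om eps j sg (lam_fix om eps j sg) Hom He
           ltac:(pose proof (eps_le_vstep om eps j Hom He Hd); pose proof (vstep_pos om Hom); lra)
           Hl Hj Hs2).
  - exact h_fix_opp.
  - exact (lam_fix_eq om eps j sg Hom He Hd Hs).
  - exact (h_fix_eq om eps j sg Hom He Hd Hs).
Qed.

Lemma eigfun_l2 : l2Z (eigfun om eps j sg).
Proof.
  apply (l2Z_of_wexp_bound _ (2 ^ j + Bsite j)). intros x. unfold eigfun.
  destruct (fix_in_ball om eps j sg Hom He Hd Hs) as [_ Hh].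
  eapply Rle_trans; [apply Rabs_triang|].
  pose proof (site_vec_wexp j sg x Hs). specialize (Hh x). lra.
Qed.

Lemma lam_fix_bound : Rabs (lam_fix om eps j sg - vlev om j) <= eps * (2 + 5 * Bsite j).
Proof.
  rewrite (lam_fix_eq om eps j sg Hom He Hd Hs) at 1. pose proof (Bsite_ge4 j).
  apply (phi_lam_bound om eps j sg (Bsite j) wexp He ltac:(lra) admissible_wexp
           (site_dominated_wexp j sg Hs) (lam_fix om eps j sg)).
  apply fix_in_ball; assumption.
Qed.

Lemma h_fix_small x : Rabs (h_fix om eps j sg x) <= 20 * eps / vstep om * Bsite j.
Proof.
  pose proof (Bsite_ge4 j). pose proof (vstep_pos om Hom). pose proof (eps_le_vstep om eps j Hom He Hd).
  rewrite (h_fix_eq om eps j sg Hom He Hd Hs).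
  eapply Rle_trans; [apply (phi_vec_bound om eps j sg (Bsite j) wexp Hom He ltac:(lra) ltac:(lra)
                              admissible_wexp (site_dominated_wexp j sg Hs));
                     apply fix_in_ball; assumption|].
  pose proof (wexp_le1 x). pose proof (wexp_pos x).
  assert (0 <= 20 * eps / vstep om * Bsite j)
    by (apply Rmult_le_pos; [unfold Rdiv; apply Rmult_le_pos; [lra|left; apply Rinv_0_lt_compat]|]; lra).
  nra.
Qed.

Lemma normalized_eig_eq_eigfun lam u : (forall x, Aeps om eps u x = lam * u x) ->
  (forall x, u (- x)%Z = sg * u x) -> u (Z.of_nat j) = 1 -> (forall x, Rabs (u x) <= 1) ->
  Rabs (lam - vlev om j) <= vstep om / 2 -> forall x, u x = eigfun om eps j sg x.
Proof.
  intros Heig Hpar Hu1 Hub Hl.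
  pose proof (eps_le_vstep om eps j Hom He Hd). pose proof (vstep_pos om Hom).
  destruct (fixed_point_of_eig om eps j sg lam Hom He ltac:(lra) Hl Hj Hs2 u Heig Hpar Hu1)
    as [HL HH].
  assert (HI : in_ball om j (Bsite j) (fun _ => 1) lam (fun x => u x - site_vec j sg x)).
  { split; [exact Hl|]. intros x. pose proof (Hub x). pose proof (site_vec_le1 j sg x Hs).
    pose proof (Bsite_ge4 j). pose proof (Rabs_triang (u x) (- site_vec j sg x)) as Ht.
    rewrite Rabs_Ropp in Ht. unfold Rminus. lra. }
  intros x. pose proof (fix_unique om eps j sg Hom He Hd Hs _ _ HI HL HH x).
  unfold eigfun. lra.
Qed.

End Eigenfunction.

(** * Localization of eigenvectors *)

Definition vanishes_at_inf (f : Z -> R) : Prop :=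
  forall eta, 0 < eta -> exists R : nat, forall x, (Z.of_nat R < Z.abs x)%Z -> Rabs (f x) < eta.

Lemma Rabs_lt_of_sq_lt a e : 0 < e -> a ^ 2 < e ^ 2 -> Rabs a < e.
Proof.
  intros He H. destruct (Rlt_dec (Rabs a) e) as [|Hn]; [assumption|].
  rewrite <- (pow2_abs a) in H.
  assert (e ^ 2 <= Rabs a ^ 2) by (apply pow_incr; lra). lra.
Qed.

Lemma l2Z_vanishes f : l2Z f -> vanishes_at_inf f.
Proof.
  intros Hl eta Heta. apply ex_series_lim_0, is_lim_seq_spec in Hl.
  assert (He2 : 0 < eta ^ 2) by (apply pow_lt; lra).
  destruct (Hl (mkposreal _ He2)) as [N HN]. simpl in HN.
  exists N. intros x Hx. apply Rabs_lt_of_sq_lt; [assumption|].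
  assert (Hk : exists k, (N <= k)%nat /\ (x = Z.of_nat k \/ x = - Z.of_nat k - 1)%Z).
  { destruct (Z_le_gt_dec 0 x).
    - exists (Z.to_nat x). split; [lia|]. left. lia.
    - exists (Z.to_nat (- x - 1)). split; [lia|]. right. lia. }
  destruct Hk as [k [Hk Hx']]. specialize (HN k Hk).
  rewrite Rminus_0_r, Rabs_pos_eq in HN by (apply Rplus_le_le_0_compat; apply pow2_ge_0).
  pose proof (pow2_ge_0 (f (Z.of_nat k))). pose proof (pow2_ge_0 (f (- Z.of_nat k - 1)%Z)).
  destruct Hx' as [-> | ->]; lra.
Qed.

Lemma vanishes_at_inf_reflect_comb f a b :
  vanishes_at_inf f -> vanishes_at_inf (fun y => a * f y + b * f (- y)%Z).
Proof.
  intros Hf eta Heta.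
  set (K := Rabs a + Rabs b + 1).
  assert (HK : 0 < K) by (unfold K; pose proof (Rabs_pos a); pose proof (Rabs_pos b); lra).
  destruct (Hf (eta / K)) as [R HR]; [apply Rdiv_lt_0_compat; assumption|].
  exists R. intros x Hx. pose proof (HR x Hx). pose proof (HR (- x)%Z ltac:(lia)).
  eapply Rle_lt_trans; [apply Rabs_triang|]. rewrite !Rabs_mult.
  assert (Rabs a * Rabs (f x) <= Rabs a * (eta / K)) by (apply Rmult_le_compat_l; [apply Rabs_pos|lra]).
  assert (Rabs b * Rabs (f (- x)%Z) <= Rabs b * (eta / K))
    by (apply Rmult_le_compat_l; [apply Rabs_pos|lra]).
  assert ((Rabs a + Rabs b) * (eta / K) < eta).
  { replace ((Rabs a + Rabs b) * (eta / K)) with (eta - eta / K) by (unfold K in *; field; lra).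
    assert (0 < eta / K) by (apply Rdiv_lt_0_compat; lra). lra. }
  lra.
Qed.

Lemma exists_max_abs_box (f : Z -> R) (R : nat) :
  exists xs, forall x, (Z.abs x <= Z.of_nat R)%Z -> Rabs (f x) <= Rabs (f xs).
Proof.
  assert (Hmax2 : forall u v, exists y, Rabs (f u) <= Rabs (f y) /\ Rabs (f v) <= Rabs (f y))
    by (intros u v; destruct (Rle_dec (Rabs (f u)) (Rabs (f v))); [exists v|exists u]; lra).
  induction R as [|R [xs Hxs]].
  - exists 0%Z. intros x Hx. replace x with 0%Z by lia. lra.
  - destruct (Hmax2 xs (Z.of_nat (S R))) as [y1 [H1 H2]].
    destruct (Hmax2 y1 (- Z.of_nat (S R))%Z) as [y [H3 H4]].
    exists y. intros x Hx. destruct (Z_le_gt_dec (Z.abs x) (Z.of_nat R)) as [Hin|Hout].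
    + specialize (Hxs x Hin). lra.
    + assert (Hx' : x = Z.of_nat (S R) \/ x = (- Z.of_nat (S R))%Z) by lia.
      destruct Hx' as [-> | ->]; lra.
Qed.

Lemma exists_max_abs f x0 : vanishes_at_inf f -> f x0 <> 0 ->
  exists xs, f xs <> 0 /\ forall x, Rabs (f x) <= Rabs (f xs).
Proof.
  intros Hdec Hx0. pose proof (Rabs_pos_lt _ Hx0).
  destruct (Hdec (Rabs (f x0)) ltac:(assumption)) as [R HR].
  destruct (exists_max_abs_box f R) as [xs Hm].
  assert (Hx0R : (Z.abs x0 <= Z.of_nat R)%Z).
  { destruct (Z_le_gt_dec (Z.abs x0) (Z.of_nat R)) as [|Hout]; [assumption|].
    specialize (HR x0 ltac:(lia)). lra. }
  pose proof (Hm x0 Hx0R).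
  assert (Hglob : forall x, Rabs (f x) <= Rabs (f xs)).
  { intros x. destruct (Z_le_gt_dec (Z.abs x) (Z.of_nat R)) as [Hin|Hout]; [auto|].
    specialize (HR x ltac:(lia)). lra. }
  exists xs. split; [|exact Hglob].
  intro E. rewrite E, Rabs_R0 in *. lra.
Qed.

Lemma eig_at_max_abs om eps f lam xs : 0 < eps ->
  (forall x, Aeps om eps f x = lam * f x) -> f xs <> 0 -> (forall x, Rabs (f x) <= Rabs (f xs)) ->
  vpot om xs <= lam <= vpot om xs + 4 * eps.
Proof.
  intros He Heig Hnz Hglob. specialize (Heig xs). unfold Aeps, Lap in Heig.
  assert (E : (vpot om xs - lam + 2 * eps) * f xs = eps * (f (xs + 1)%Z + f (xs - 1)%Z)) by lra.
  assert (B : Rabs (vpot om xs - lam + 2 * eps) * Rabs (f xs) <= 2 * eps * Rabs (f xs)).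
  { rewrite <- Rabs_mult, E, Rabs_mult, Rabs_pos_eq by lra.
    pose proof (Hglob (xs + 1)%Z). pose proof (Hglob (xs - 1)%Z).
    pose proof (Rabs_triang (f (xs + 1)%Z) (f (xs - 1)%Z)). nra. }
  pose proof (Rabs_pos_lt _ Hnz).
  assert (Hb : Rabs (vpot om xs - lam + 2 * eps) <= 2 * eps)
    by (apply (Rmult_le_reg_r (Rabs (f xs))); assumption).
  apply Rabs_le_between in Hb. lra.
Qed.

Lemma eig_max_point om eps f lam : 0 < eps -> vanishes_at_inf f -> (exists x0, f x0 <> 0) ->
  (forall x, Aeps om eps f x = lam * f x) ->
  exists xs, (forall x, Rabs (f x) <= Rabs (f xs)) /\ f xs <> 0 /\
    vpot om xs <= lam <= vpot om xs + 4 * eps.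
Proof.
  intros He Hdec [x0 Hx0] Heig.
  destruct (exists_max_abs f x0 Hdec Hx0) as [xs [Hnz Hglob]].
  exists xs. repeat split; try assumption; apply (eig_at_max_abs om eps f lam xs He Heig Hnz Hglob).
Qed.

Lemma Aeps_scal om eps a f x : Aeps om eps (fun y => a * f y) x = a * Aeps om eps f x.
Proof. unfold Aeps, Lap. ring. Qed.

Lemma Aeps_reflect_comb om eps f a b x :
  Aeps om eps (fun y => a * f y + b * f (- y)%Z) x = a * Aeps om eps f x + b * Aeps om eps f (- x)%Z.
Proof.
  unfold Aeps, Lap. rewrite vpot_opp.
  replace (- (x + 1))%Z with (- x - 1)%Z by ring. replace (- (x - 1))%Z with (- x + 1)%Z by ring.
  ring.
Qed.

Lemma parity_eig_multiple om eps j sg lam g : 0 < om -> 0 < eps -> eps <= eps_max om j ->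
  Rabs sg = 1 -> sg * sg = 1 ->
  vanishes_at_inf g -> (forall x, g (- x)%Z = sg * g x) -> (forall x, Aeps om eps g x = lam * g x) ->
  vlev om j <= lam <= vlev om j + 4 * eps ->
  forall x, g x = g (Z.of_nat j) * eigfun om eps j sg x.
Proof.
  intros Hom He Hd Hs Hs2 Hdec Hpar Heig Hl.
  pose proof (eps_le_vstep om eps j Hom He Hd). pose proof (vstep_pos om Hom).
  destruct (classic (exists x0, g x0 <> 0)) as [Hex|Hno].
  2:{ assert (Z0 : forall x, g x = 0) by (intros x; apply NNPP; intro; apply Hno; eauto).
      intros x. rewrite !Z0. ring. }
  destruct (eig_max_point om eps g lam He Hdec Hex Heig) as [xs [Hm [Hnz Hb]]].
  assert (Hxs : Z.abs xs = Z.of_nat j)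
    by (apply (abs_eq_of_vpot_close om eps); [assumption|lra|apply Rabs_le; lra]).
  assert (Hgj : Rabs (g xs) = Rabs (g (Z.of_nat j))).
  { destruct (Z.abs_spec xs) as [[_ E]|[_ E]]; rewrite Hxs in E.
    - rewrite E. reflexivity.
    - replace xs with (- Z.of_nat j)%Z by lia. rewrite Hpar, Rabs_mult, Hs. ring. }
  set (c := g (Z.of_nat j)) in *.
  assert (Hc : c <> 0) by (intro E; rewrite E, Rabs_R0 in Hgj; apply Hnz, Rabs_eq_0, Hgj).
  assert (Hj : j = 0%nat -> sg = 1).
  { intros ->. pose proof (Hpar 0%Z) as Hg0. simpl in Hg0. unfold c in Hc. simpl in Hc.
    apply (Rmult_eq_reg_r (g 0%Z)); [lra|exact Hc]. }
  assert (Hu := normalized_eig_eq_eigfun om eps j sg Hom He Hd Hs Hj Hs2 lam (fun y => / c * g y)).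
  intros x. rewrite <- Hu; [field; exact Hc| | | | |].
  - intros y. rewrite Aeps_scal, Heig. ring.
  - intros y. rewrite Hpar. ring.
  - unfold c. field. exact Hc.
  - intros y. rewrite Rabs_mult, Rabs_inv, <- Hgj.
    pose proof (Rabs_pos_lt _ Hnz). apply (Rmult_le_reg_l (Rabs (g xs))); [assumption|].
    rewrite <- Rmult_assoc, Rinv_r by lra. specialize (Hm y). lra.
  - apply Rabs_le. lra.
Qed.

Lemma eig_decomp om eps j f lam : 0 < om -> 0 < eps -> eps <= eps_max om j -> vanishes_at_inf f ->
  (forall x, Aeps om eps f x = lam * f x) -> vlev om j <= lam <= vlev om j + 4 * eps ->
  forall x, f x = (f (Z.of_nat j) + f (- Z.of_nat j)%Z) / 2 * eigfun om eps j 1 x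
                + (f (Z.of_nat j) - f (- Z.of_nat j)%Z) / 2 * eigfun om eps j (-1) x.
Proof.
  intros Hom He Hd Hdec Heig Hl.
  assert (Hc : forall a b x, Aeps om eps (fun y => a * f y + b * f (- y)%Z) x =
                             lam * (a * f x + b * f (- x)%Z))
    by (intros; rewrite Aeps_reflect_comb, !Heig; ring).
  pose proof (parity_eig_multiple om eps j 1 lam (fun y => / 2 * f y + / 2 * f (- y)%Z)
    Hom He Hd Rabs_R1 ltac:(ring) (vanishes_at_inf_reflect_comb _ _ _ Hdec)
    ltac:(intros; cbv beta; rewrite Z.opp_involutive; ring) (Hc _ _) Hl) as E1.
  pose proof (parity_eig_multiple om eps j (-1) lam (fun y => / 2 * f y + (- / 2) * f (- y)%Z)
    Hom He Hd ltac:(rewrite Rabs_left; lra) ltac:(ring)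
    (vanishes_at_inf_reflect_comb _ _ _ Hdec)
    ltac:(intros; cbv beta; rewrite Z.opp_involutive; ring) (Hc _ _) Hl) as E2.
  intros x. specialize (E1 x). specialize (E2 x). simpl in E1, E2.
  replace ((f (Z.of_nat j) + f (- Z.of_nat j)%Z) / 2)
    with (/ 2 * f (Z.of_nat j) + / 2 * f (- Z.of_nat j)%Z) by field.
  replace ((f (Z.of_nat j) - f (- Z.of_nat j)%Z) / 2)
    with (/ 2 * f (Z.of_nat j) + - / 2 * f (- Z.of_nat j)%Z) by field.
  rewrite <- E1, <- E2. lra.
Qed.

(** * The first [2n+1] eigenvectors *)

(* Index [k = 2j] is the even eigenvector at level [j], index [k = 2j - 1] the odd one. *)
Definition site_of (k : nat) : nat := Nat.div2 (S k).
Definition parity_of (k : nat) : R := if Nat.even k then 1 else -1.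
Definition Geig (om eps : R) (k : nat) : Z -> R := eigfun om eps (site_of k) (parity_of k).
Definition Glam (om eps : R) (k : nat) : R := lam_fix om eps (site_of k) (parity_of k).

Lemma site_of_spec k :
  (Nat.even k = true /\ k = 2 * site_of k)%nat \/
  (Nat.even k = false /\ k = 2 * site_of k - 1 /\ 1 <= site_of k)%nat.
Proof.
  unfold site_of. pose proof (Nat.div2_odd (S k)) as H. rewrite Nat.odd_succ in H.
  destruct (Nat.even k) eqn:E; cbn [Nat.b2n] in H; [left|right]; lia.
Qed.

Lemma site_of_le k n : (k <= 2 * n)%nat -> (site_of k <= n)%nat.
Proof. intros. destruct (site_of_spec k) as [[_ H1]|[_ [H1 H2]]]; lia. Qed.

Lemma parity_of_abs k : Rabs (parity_of k) = 1.
Proof.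
  unfold parity_of. destruct (Nat.even k); [apply Rabs_R1|]. rewrite Rabs_left; lra.
Qed.

Lemma parity_of_sq k : parity_of k * parity_of k = 1.
Proof. unfold parity_of. destruct (Nat.even k); lra. Qed.

Lemma parity_of_site0 k : site_of k = 0%nat -> parity_of k = 1.
Proof.
  intros H. unfold parity_of. destruct (site_of_spec k) as [[E _]|[E [_ H2]]]; [rewrite E|lia].
  reflexivity.
Qed.

Lemma site_parity_inj k l : site_of k = site_of l -> parity_of k = parity_of l -> k = l.
Proof.
  intros H1 H2. unfold parity_of in H2.
  destruct (site_of_spec k) as [[Ek Hk]|[Ek [Hk _]]];
  destruct (site_of_spec l) as [[El Hl]|[El [Hl _]]]; rewrite Ek, El in H2; lra || lia.
Qed.

Lemma site_of_even j : site_of (2 * j) = j /\ parity_of (2 * j) = 1.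
Proof.
  assert (E : Nat.even (2 * j) = true) by (rewrite Nat.even_mul; reflexivity).
  unfold parity_of. rewrite E. split; [|reflexivity].
  destruct (site_of_spec (2 * j)) as [[_ H]|[E2 _]]; [lia|congruence].
Qed.

Lemma site_of_odd j : (1 <= j)%nat -> site_of (2 * j - 1) = j /\ parity_of (2 * j - 1) = -1.
Proof.
  intros Hj. destruct (site_of_spec (2 * j - 1)) as [[E H]|[E [H _]]].
  - exfalso. replace (2 * j - 1)%nat with (S (2 * (j - 1))) in E by lia.
    rewrite Nat.even_succ, Nat.odd_mul in E. discriminate.
  - unfold parity_of. rewrite E. split; [lia|reflexivity].
Qed.

Definition probe (k : nat) (f : Z -> R) : R :=
  (f (Z.of_nat (site_of k)) + parity_of k * f (- Z.of_nat (site_of k))%Z) / 2.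

Lemma probe_site_vec k l :
  probe k (site_vec (site_of l) (parity_of l)) = if Nat.eqb l k then 1 else 0.
Proof.
  unfold probe, site_vec.
  destruct (Nat.eq_dec (site_of k) (site_of l)) as [E|E].
  - rewrite E. destruct (Z.eq_dec (Z.of_nat (site_of l)) (Z.of_nat (site_of l))) as [_|]; [|lia].
    destruct (Z.eq_dec (- Z.of_nat (site_of l)) (Z.of_nat (site_of l))) as [E2|E2].
    + assert (Hl : site_of l = 0%nat) by lia.
      assert (k = l) by (apply site_parity_inj; [lia|rewrite !parity_of_site0 by lia; reflexivity]).
      subst. rewrite Nat.eqb_refl, (parity_of_site0 l Hl). lra.
    + destruct (Z.eq_dec (- Z.of_nat (site_of l)) (- Z.of_nat (site_of l))) as [_|]; [|lia].
      destruct (Nat.eqb_spec l k) as [->|Hne].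
      * pose proof (parity_of_sq k). lra.
      * assert (parity_of k <> parity_of l)
          by (intro Es; apply Hne; symmetry; apply site_parity_inj; assumption).
        unfold parity_of in *. destruct (Nat.even k), (Nat.even l); lra || congruence.
  - destruct (Z.eq_dec (Z.of_nat (site_of k)) (Z.of_nat (site_of l))); [lia|].
    destruct (Z.eq_dec (Z.of_nat (site_of k)) (- Z.of_nat (site_of l))); [lia|].
    destruct (Z.eq_dec (- Z.of_nat (site_of k)) (Z.of_nat (site_of l))); [lia|].
    destruct (Z.eq_dec (- Z.of_nat (site_of k)) (- Z.of_nat (site_of l))); [lia|].
    destruct (Nat.eqb_spec l k); [subst; lia|]. lra.
Qed.

Lemma probe_sum k m (c : nat -> R) (F : nat -> Z -> R) :
  probe k (fun x => sum_f_R0 (fun l => c l * F l x) m) = sum_f_R0 (fun l => c l * probe k (F l)) m.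
Proof.
  rewrite (sum_eq (fun l => c l * probe k (F l))
     (fun l => c l * F l (Z.of_nat (site_of k)) * / 2
               + c l * F l (- Z.of_nat (site_of k))%Z * (parity_of k / 2)))
    by (intros; unfold probe; field).
  rewrite sum_plus, <- !scal_sum. unfold probe. field.
Qed.

Lemma probe_abs k f th : (forall x, Rabs (f x) <= th) -> Rabs (probe k f) <= th.
Proof.
  intros H. unfold probe, Rdiv. rewrite Rabs_mult, Rabs_inv, (Rabs_pos_eq 2) by lra.
  pose proof (Rabs_triang (f (Z.of_nat (site_of k))) (parity_of k * f (- Z.of_nat (site_of k))%Z))
    as Ht.
  rewrite Rabs_mult, parity_of_abs in Ht.
  pose proof (H (Z.of_nat (site_of k))). pose proof (H (- Z.of_nat (site_of k))%Z).
  lra.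
Qed.

Lemma near_identity_kernel_trivial m (c : nat -> R) (e : nat -> nat -> R) th :
  th * INR (S m) <= / 2 ->
  (forall l k, (l <= m)%nat -> (k <= m)%nat -> Rabs (e l k) <= th) ->
  (forall k, (k <= m)%nat ->
     sum_f_R0 (fun l => c l * ((if Nat.eqb l k then 1 else 0) + e l k)) m = 0) ->
  forall i, (i <= m)%nat -> c i = 0.
Proof.
  intros Hth He Hsys.
  set (Ssum := sum_f_R0 (fun i => Rabs (c i)) m).
  assert (HS0 : 0 <= Ssum) by (apply cond_pos_sum; intros; apply Rabs_pos).
  assert (Hk : forall k, (k <= m)%nat -> Rabs (c k) <= th * Ssum).
  { intros k Hkm. specialize (Hsys k Hkm).
    rewrite (sum_eq _ (fun l => (if Nat.eqb l k then c l else 0) + c l * e l k)) in Hsys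
      by (intros l _; destruct (Nat.eqb l k); ring).
    rewrite sum_plus, sum_f_R0_indicator in Hsys by assumption.
    replace (c k) with (- sum_f_R0 (fun l => c l * e l k) m) by lra.
    rewrite Rabs_Ropp. eapply Rle_trans; [apply sum_f_R0_triangle|].
    unfold Ssum. rewrite scal_sum. apply sum_Rle. intros l Hl. rewrite Rabs_mult.
    apply Rmult_le_compat_l; [apply Rabs_pos|]. apply He; assumption. }
  assert (HS : Ssum <= th * Ssum * INR (S m)).
  { unfold Ssum at 1. eapply Rle_trans; [apply sum_Rle; intros k Hkm; apply (Hk k Hkm)|].
    rewrite sum_cte. lra. }
  assert (HSz : Ssum = 0) by nra.
  intros i Hi. specialize (Hk i Hi). rewrite HSz, Rmult_0_r in Hk.
  apply Rabs_eq_0. pose proof (Rabs_pos (c i)). lra.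
Qed.

Lemma Geig_lin_indep om eps n m : 0 < om -> 0 < eps -> eps <= eps_max om n -> (m <= 2 * n)%nat ->
  20 * eps / vstep om * Bsite n * INR (S m) <= / 2 -> lin_indep m (Geig om eps).
Proof.
  intros Hom He Hd Hm Hth c Hc.
  apply (near_identity_kernel_trivial m c
           (fun l k => probe k (h_fix om eps (site_of l) (parity_of l)))
           (20 * eps / vstep om * Bsite n) Hth).
  - intros l k Hl _. apply probe_abs. intros x.
    pose proof (site_of_le l n ltac:(lia)) as Hj.
    pose proof (eps_max_anti om (site_of l) n Hom Hj).
    eapply Rle_trans; [apply h_fix_small; [assumption|assumption|lra|apply parity_of_abs]|].
    apply Rmult_le_compat_l; [|apply Bsite_mono; assumption].
    pose proof (vstep_pos om Hom).
    unfold Rdiv. apply Rmult_le_pos; [lra|left; apply Rinv_0_lt_compat; lra].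
  - intros k _.
    rewrite (sum_eq _ (fun l => c l * probe k (Geig om eps l))).
    2:{ intros l _. rewrite <- probe_site_vec. unfold probe, Geig, eigfun. field. }
    rewrite <- probe_sum. unfold probe. cbv beta. rewrite !Hc. lra.
Qed.

(** * Counting eigenvalues of [H_N] *)

Definition scaleN (gam : R) (N : nat) : R := Rpower (INR N) (-2 * gam).
Definition epsN (gam : R) (N : nat) : R := INR N ^ 2 / 2 / scaleN gam N.

Lemma scaleN_pos gam N : 0 < scaleN gam N.
Proof. unfold scaleN, Rpower. apply exp_pos. Qed.

Lemma HN_scaleN om gam N f x : HN om gam N f x = scaleN gam N * Aeps om (epsN gam N) f x.
Proof. pose proof (scaleN_pos gam N). unfold HN, Aeps, epsN, scaleN in *. field. lra. Qed.

Lemma is_eigvec_Aeps om gam N mu f : is_eigvec om gam N mu f ->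
  l2Z f /\ (exists x, f x <> 0) /\
  forall x, Aeps om (epsN gam N) f x = (mu / scaleN gam N) * f x.
Proof.
  intros [H1 [H2 H3]]. split; [exact H1|]. split; [exact H2|]. intros x. specialize (H3 x).
  rewrite HN_scaleN in H3. pose proof (scaleN_pos gam N).
  apply (Rmult_eq_reg_l (scaleN gam N)); [rewrite H3; field|]; lra.
Qed.

Definition eig_set (om gam : R) (N m : nat) : R -> Prop :=
  fun lam => exists (F : nat -> Z -> R) (mu : nat -> R),
     lin_indep m F /\
     forall i, (i <= m)%nat -> is_eigvec om gam N (mu i) (F i) /\ mu i <= lam.

Lemma Glb_Rbar_between (E : R -> Prop) (L U : R) : E U -> (forall x, E x -> L <= x) ->
  L <= real (Glb_Rbar E) <= U.
Proof.
  intros HU HL. destruct (Glb_Rbar_correct E) as [Hlb Hgr].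
  pose proof (Hlb U HU) as A.
  assert (B : Rbar_le L (Glb_Rbar E)) by (apply Hgr; intros x Hx; apply HL; assumption).
  destruct (Glb_Rbar E) as [g| |]; simpl in *; try contradiction. split; assumption.
Qed.

Lemma not_lin_indep_of_span m K (F G : nat -> Z -> R) : (K < m)%nat ->
  (forall i, (i <= m)%nat -> exists r : nat -> R, forall x, F i x = sum_f_R0 (fun k => r k * G k x) K) ->
  ~ lin_indep m F.
Proof.
  intros HK Hspan Hind.
  assert (Hr : forall i, exists r : nat -> R,
             (i <= m)%nat -> forall x, F i x = sum_f_R0 (fun k => r k * G k x) K).
  { intros i. destruct (le_lt_dec i m) as [Hi|Hi].
    - destruct (Hspan i Hi) as [r Hr]. exists r. intros _. exact Hr.
    - exists (fun _ => 0). intros Hi'. lia. }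
  set (a := fun i => proj1_sig (constructive_indefinite_description _ (Hr i))).
  assert (Ha : forall i, (i <= m)%nat -> forall x, F i x = sum_f_R0 (fun k => a i k * G k x) K).
  { intros i. unfold a. destruct (constructive_indefinite_description _ (Hr i)). assumption. }
  destruct (homogeneous_system_nontrivial m (seq 0 (S K)) a ltac:(rewrite length_seq; lia))
    as [c [[i0 [Hi0 Hci0]] Hc]].
  apply Hci0, (Hind c); [|assumption]. intros x.
  rewrite (sum_eq _ (fun i => sum_f_R0 (fun k => c i * a i k * G k x) K)).
  2:{ intros i Hi. rewrite (Ha i Hi x), scal_sum. apply sum_eq. intros; ring. }
  rewrite sum_f_R0_swap. apply sum_f_R0_zero. intros k Hk.
  rewrite <- (scal_sum (fun i => c i * a i k) m (G k x)).
  rewrite (Hc k) by (apply in_seq; lia). ring.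
Qed.

Lemma sum_f_R0_two_indicators (a b : R) p p' K (g : nat -> R) : (p <= K)%nat -> (p' <= K)%nat ->
  sum_f_R0 (fun k => ((if Nat.eqb k p then a else 0) + (if Nat.eqb k p' then b else 0)) * g k) K
   = a * g p + b * g p'.
Proof.
  intros H1 H2.
  rewrite (sum_eq _ (fun k => (if Nat.eqb k p then a * g k else 0)
                              + (if Nat.eqb k p' then b * g k else 0)))
    by (intros; destruct (Nat.eqb i p), (Nat.eqb i p'); ring).
  rewrite sum_plus, (sum_f_R0_indicator (fun k => a * g k)), (sum_f_R0_indicator (fun k => b * g k))
    by assumption.
  reflexivity.
Qed.

Lemma eig_below_level_in_span om eps n f lam : 0 < om -> 0 < eps -> eps <= eps_max om n ->
  (1 <= n)%nat -> l2Z f -> (exists x, f x <> 0) ->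
  (forall x, Aeps om eps f x = lam * f x) -> lam < vlev om n ->
  exists r : nat -> R, forall x, f x = sum_f_R0 (fun k => r k * Geig om eps k x) (2 * n - 2).
Proof.
  intros Hom He Hd Hn Hl2 Hnz Heig Hlam.
  destruct (eig_max_point om eps f lam He (l2Z_vanishes _ Hl2) Hnz Heig) as [xs [_ [_ Hb]]].
  assert (Hxs : (Z.abs xs < Z.of_nat n)%Z) by (apply (abs_lt_of_vpot_lt om); [assumption|lra]).
  set (j := Z.abs_nat xs).
  assert (HV : vlev om j = vpot om xs)
    by (unfold vlev, j; rewrite Nat2Z.inj_abs_nat, vpot_abs; reflexivity).
  assert (Hdj : eps <= eps_max om j) by (eapply Rle_trans; [exact Hd|apply eps_max_anti; [assumption|lia]]).
  pose proof (eig_decomp om eps j f lam Hom He Hdj (l2Z_vanishes _ Hl2) Heig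
                ltac:(rewrite HV; lra)) as Hdec.
  set (a := (f (Z.of_nat j) + f (- Z.of_nat j)%Z) / 2) in *.
  set (b := (f (Z.of_nat j) - f (- Z.of_nat j)%Z) / 2) in *.
  exists (fun k => (if Nat.eqb k (2 * j) then a else 0) + (if Nat.eqb k (2 * j - 1) then b else 0)).
  intros x. rewrite sum_f_R0_two_indicators by lia.
  rewrite Hdec. unfold Geig. destruct (site_of_even j) as [-> ->].
  destruct (Nat.eq_dec j 0) as [Hj0|Hj0].
  (* for [j = 0] both indices are [0], but then the odd part [b] vanishes *)
  - assert (Hb0 : b = 0) by (unfold b; rewrite Hj0; simpl; lra). rewrite Hb0. ring.
  - destruct (site_of_odd j ltac:(lia)) as [-> ->]. reflexivity.
Qed.

Lemma eig_set_lower om gam N n m : 0 < om -> 0 < epsN gam N -> epsN gam N <= eps_max om n ->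
  (1 <= n)%nat -> (2 * n - 1 <= m)%nat ->
  forall L, eig_set om gam N m L -> scaleN gam N * vlev om n <= L.
Proof.
  intros Hom He Hd Hn Hm L [F [mu [Hind Hall]]].
  destruct (Rle_dec (scaleN gam N * vlev om n) L) as [|HL]; [assumption|]. exfalso.
  pose proof (scaleN_pos gam N) as Hs.
  apply (not_lin_indep_of_span m (2 * n - 2) F (Geig om (epsN gam N))); [lia| |exact Hind].
  intros i Hi. destruct (Hall i Hi) as [Hev Hmu].
  destruct (is_eigvec_Aeps om gam N (mu i) (F i) Hev) as [Hl2 [Hnz Heig]].
  apply (eig_below_level_in_span om (epsN gam N) n (F i) (mu i / scaleN gam N)); try assumption.
  apply (Rmult_lt_reg_l (scaleN gam N)); [assumption|].
  replace (scaleN gam N * (mu i / scaleN gam N)) with (mu i) by (field; lra). lra.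
Qed.

Lemma eig_set_nonneg om gam N m : 0 < epsN gam N -> forall L, eig_set om gam N m L -> 0 <= L.
Proof.
  intros He L [F [mu [_ Hall]]].
  destruct (Hall 0%nat ltac:(lia)) as [Hev Hmu].
  destruct (is_eigvec_Aeps om gam N (mu 0%nat) (F 0%nat) Hev) as [Hl2 [Hnz Heig]].
  destruct (eig_max_point om (epsN gam N) (F 0%nat) _ He (l2Z_vanishes _ Hl2) Hnz Heig)
    as [xs [_ [_ [Hb1 _]]]].
  pose proof (vpot_nonneg om xs). pose proof (scaleN_pos gam N).
  replace (mu 0%nat) with (scaleN gam N * (mu 0%nat / scaleN gam N)) in Hmu by (field; lra).
  nra.
Qed.

(* The second bound is what [Geig_lin_indep] needs for [m <= 2n]. *)
Definition eps_upper (om : R) (n : nat) : R :=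
  Rmin (eps_max om n) (vstep om / (40 * INR (S (2 * n)) * Bsite n)).

Lemma eps_upper_pos om n : 0 < om -> 0 < eps_upper om n.
Proof.
  intros Hom. pose proof (vstep_pos om Hom). pose proof (Bsite_ge4 n).
  assert (0 < INR (S (2 * n))) by (apply lt_0_INR; lia).
  apply Rmin_pos; [apply eps_max_pos; assumption|].
  apply Rdiv_lt_0_compat; [lra|]. apply Rmult_lt_0_compat; lra.
Qed.

Lemma eps_upper_indep om eps n m : 0 < om -> eps <= eps_upper om n -> (m <= 2 * n)%nat ->
  20 * eps / vstep om * Bsite n * INR (S m) <= / 2.
Proof.
  intros Hom Hd Hm. pose proof (vstep_pos om Hom). pose proof (Bsite_ge4 n).
  assert (Hle : eps <= vstep om / (40 * INR (S (2 * n)) * Bsite n))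
    by (eapply Rle_trans; [exact Hd|apply Rmin_r]).
  assert (Hm1 : INR (S m) <= INR (S (2 * n))) by (apply le_INR; lia).
  pose proof (pos_INR (S m)).
  assert (0 < INR (S (2 * n))) by (apply lt_0_INR; lia).
  apply (Rmult_le_compat_r (40 * INR (S (2 * n)) * Bsite n)) in Hle; [|nra].
  replace (vstep om / (40 * INR (S (2 * n)) * Bsite n) * (40 * INR (S (2 * n)) * Bsite n))
    with (vstep om) in Hle by (field; lra).
  replace (20 * eps / vstep om * Bsite n * INR (S m))
    with ((20 * eps * Bsite n * INR (S m)) / vstep om) by (field; lra).
  apply (Rmult_le_reg_r (vstep om)); [lra|]. unfold Rdiv.
  rewrite Rmult_assoc, Rinv_l, Rmult_1_r by lra.
  nra.
Qed.

Lemma eig_set_upper om gam N n m : 0 < om -> 0 < epsN gam N -> epsN gam N <= eps_upper om n ->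
  (m <= 2 * n)%nat ->
  eig_set om gam N m (scaleN gam N * (vlev om n + epsN gam N * (2 + 5 * Bsite n))).
Proof.
  intros Hom He Hd Hm. set (eps := epsN gam N) in *.
  assert (Hdn : eps <= eps_max om n) by (eapply Rle_trans; [exact Hd|apply Rmin_l]).
  pose proof (scaleN_pos gam N) as Hs.
  exists (Geig om eps), (fun k => scaleN gam N * Glam om eps k). split.
  - exact (Geig_lin_indep om eps n m Hom He Hdn Hm (eps_upper_indep om eps n m Hom Hd Hm)).
  - intros i Hi. pose proof (site_of_le i n ltac:(lia)) as Hj.
    assert (Hdj : eps <= eps_max om (site_of i))
      by (eapply Rle_trans; [exact Hdn|apply eps_max_anti; assumption]).
    pose proof (parity_of_abs i) as Ha. pose proof (parity_of_site0 i) as H0.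
    pose proof (parity_of_sq i) as Hsq.
    split; [split; [|split]|].
    + exact (eigfun_l2 om eps (site_of i) (parity_of i) Hom He Hdj Ha).
    + exists (Z.of_nat (site_of i)). unfold Geig.
      rewrite (eigfun_site om eps (site_of i) (parity_of i) Hom He Hdj Ha). lra.
    + intros x. rewrite HN_scaleN. fold eps. unfold Geig, Glam.
      rewrite (eigfun_eig om eps (site_of i) (parity_of i) Hom He Hdj Ha H0 Hsq). ring.
    + apply Rmult_le_compat_l; [lra|].
      pose proof (lam_fix_bound om eps (site_of i) (parity_of i) Hom He Hdj Ha) as Hb.
      apply Rabs_le_between in Hb.
      pose proof (vlev_mono om (site_of i) n Hj). pose proof (Bsite_mono (site_of i) n Hj).
      unfold Glam. nra.
Qed.

Lemma Eig_between om gam N n m : 0 < om -> gam < -1 ->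
  0 < epsN gam N -> epsN gam N <= eps_upper om n ->
  ((n = 0 /\ m = 0) \/ (1 <= n /\ 2 * n - 1 <= m <= 2 * n))%nat ->
  vlev om n <= Eig om gam N m / Rpower (INR N) (2 * Rabs gam)
            <= vlev om n + epsN gam N * (2 + 5 * Bsite n).
Proof.
  intros Hom Hg He Hd Hnm.
  assert (Hsc : Rpower (INR N) (2 * Rabs gam) = scaleN gam N)
    by (unfold scaleN; rewrite Rabs_left by lra; f_equal; ring).
  rewrite Hsc. pose proof (scaleN_pos gam N) as Hs.
  assert (Hlow : forall L, eig_set om gam N m L -> scaleN gam N * vlev om n <= L).
  { destruct Hnm as [[-> ->]|[H1 [H2 _]]].
    - intros L HL. replace (vlev om 0) with 0 by (unfold vlev, vpot; simpl; field).
      rewrite Rmult_0_r. exact (eig_set_nonneg om gam N 0 He L HL).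
    - apply eig_set_lower; try assumption. eapply Rle_trans; [exact Hd|apply Rmin_l]. }
  destruct (Glb_Rbar_between _ _ _ (eig_set_upper om gam N n m Hom He Hd ltac:(lia)) Hlow)
    as [B1 B2].
  unfold Eig. fold (eig_set om gam N m).
  split; apply (Rmult_le_reg_l (scaleN gam N)); try assumption;
    replace (scaleN gam N * (real (Glb_Rbar (eig_set om gam N m)) / scaleN gam N))
      with (real (Glb_Rbar (eig_set om gam N m))) by (field; lra); lra.
Qed.

Lemma epsN_pos gam N : (1 <= N)%nat -> 0 < epsN gam N.
Proof.
  intros HN. pose proof (scaleN_pos gam N). assert (0 < INR N) by (apply lt_0_INR; lia).
  unfold epsN. apply Rdiv_lt_0_compat; [|assumption].
  apply Rdiv_lt_0_compat; [apply pow_lt|]; lra.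
Qed.

Lemma epsN_eq gam N : 0 < INR N -> epsN gam N = / (2 * Rpower (INR N) (-2 * gam - 2)).
Proof.
  intros HN. unfold epsN, scaleN.
  assert (E : Rpower (INR N) (-2 * gam) = INR N ^ 2 * Rpower (INR N) (-2 * gam - 2)).
  { rewrite <- Rpower_pow, <- Rpower_plus by assumption. f_equal. simpl. ring. }
  rewrite E. pose proof (exp_pos ((-2 * gam - 2) * ln (INR N))). unfold Rpower in *.
  field. split; lra.
Qed.

Lemma epsN_lim gam : gam < -1 -> is_lim_seq (epsN gam) 0.
Proof.
  intros Hg. apply is_lim_seq_spec. intros eta.
  set (p := -2 * gam - 2). assert (Hp : 0 < p) by (unfold p; lra).
  set (T := / (eta * p)).
  destruct (archimed (Rmax (exp T) 1)) as [Hup _].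
  pose proof (Rmax_l (exp T) 1). pose proof (Rmax_r (exp T) 1).
  exists (Z.to_nat (up (Rmax (exp T) 1))). intros N HN.
  assert (HN' : exp T < INR N).
  { apply le_INR in HN. rewrite INR_IZR_INZ, Z2Nat.id in HN by (apply le_IZR; lra). lra. }
  pose proof (exp_pos T) as HeT. assert (HN0 : 0 < INR N) by lra.
  rewrite Rminus_0_r, epsN_eq by assumption. fold p.
  assert (HR : 0 < Rpower (INR N) p) by (unfold Rpower; apply exp_pos).
  rewrite Rabs_pos_eq by (left; apply Rinv_0_lt_compat; lra).
  (* [N^p >= 1 + p ln N > p T = 1 / eta] *)
  assert (Hln : T < ln (INR N)) by (rewrite <- (ln_exp T); apply ln_increasing; assumption).
  assert (Hpow : / eta < Rpower (INR N) p).
  { unfold Rpower. pose proof (exp_ineq1_le (p * ln (INR N))).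
    replace (/ eta) with (p * T) by (unfold T; field; split; [pose proof (cond_pos eta)|]; lra).
    apply Rmult_lt_compat_l with (r := p) in Hln; lra. }
  pose proof (cond_pos eta) as He.
  apply Rinv_lt_contravar in Hpow; [|apply Rmult_lt_0_compat; [apply Rinv_0_lt_compat|]; lra].
  rewrite Rinv_inv in Hpow.
  apply Rlt_trans with (/ Rpower (INR N) p); [|assumption].
  apply Rinv_lt_contravar; [apply Rmult_lt_0_compat|]; lra.
Qed.

Lemma Eig_rescaled_lim om gam n m : 0 < om -> gam < -1 ->
  ((n = 0 /\ m = 0) \/ (1 <= n /\ 2 * n - 1 <= m <= 2 * n))%nat ->
  is_lim_seq (fun N : nat => Eig om gam N m / Rpower (INR N) (2 * Rabs gam)) (vlev om n).
Proof.
  intros Hom Hg Hnm. set (C := 2 + 5 * Bsite n).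
  apply (is_lim_seq_le_le_loc (fun _ => vlev om n) _ (fun N => vlev om n + epsN gam N * C)).
  - pose proof (epsN_lim gam Hg) as Hl. apply is_lim_seq_spec in Hl.
    destruct (Hl (mkposreal _ (eps_upper_pos om n Hom))) as [N0 HN0].
    exists (max N0 1). intros N HN. specialize (HN0 N ltac:(lia)). simpl in HN0.
    pose proof (epsN_pos gam N ltac:(lia)).
    rewrite Rminus_0_r, Rabs_pos_eq in HN0 by lra.
    apply Eig_between; [assumption|assumption|assumption|lra|assumption].
  - apply is_lim_seq_const.
  - assert (Hw : is_lim_seq (fun N => vlev om n + epsN gam N * C) (vlev om n + 0 * C))
      by (apply is_lim_seq_plus'; [apply is_lim_seq_const|];
          exact (is_lim_seq_scal_r _ C 0 (epsN_lim gam Hg))).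
    replace (vlev om n + 0 * C) with (vlev om n) in Hw by ring. exact Hw.
Qed.

Theorem proposition4p2 (om gam : R) (hom : 0 < om) (hgam : gam < -1) :
  is_lim_seq (fun N : nat => Eig om gam N 0 / Rpower (INR N) (2 * Rabs gam)) 0 /\
  forall n : nat, (1 <= n)%nat ->
    is_lim_seq (fun N : nat => Eig om gam N (2 * n) / Rpower (INR N) (2 * Rabs gam))
      (om^2 * (INR n)^2 / 2) /\
    is_lim_seq (fun N : nat => Eig om gam N (2 * n - 1) / Rpower (INR N) (2 * Rabs gam))
      (om^2 * (INR n)^2 / 2).
Proof.
  assert (Hlev : forall n, vlev om n = om ^ 2 * INR n ^ 2 / 2)
    by (intros n; unfold vlev, vpot; rewrite INR_IZR_INZ; reflexivity).
  split.
  - replace 0 with (vlev om 0) by (rewrite Hlev; simpl; field).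
    apply Eig_rescaled_lim; [assumption|assumption|left; lia].
  - intros n Hn. rewrite <- Hlev.
    split; apply Eig_rescaled_lim; try assumption; right; lia.
Qed.
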